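(* Let $k\ge2$, $m\ge1$, $N_1=n-mk\ge0$, $N_2=m$; let $\eta_1\in\mathbb C$ with $\hbar=k\eta_1$, $t_1=e^{\eta_1/2}$ (so $q=t_1^k$). Let $S_0=\bigsqcup_{\ell=1}^{N_2}\{e_{N_1+k(\ell-1)+j}-e_{N_1+k(\ell-1)+j+1}:1\le j\le k-1\}$, $\mathcal D_0=\{x: x_j-x_{j+1}=\eta_1$ whenever $e_j-e_{j+1}\in S_0\}$, with coordinates $x_1,\dots,x_{N_1}$ and $y_\ell=\frac1k\sum_{s=0}^{k-1}x_{N_1+k\ell-s}$. Then the restriction of the Koornwinder operator $M_{-e_1}$ to $\mathcal D_0$ is well defined and $$\overline{M_{-e_1}}=(t_0t_n)^{-1}\mathcal M_{N_1,N_2}+\kappa_t,$$ where $\mathcal M_{N_1,N_2}$ is the generalized Koornwinder operator with parameters $s=t_1$, $\xi=\eta_1$, $a=t_0u_0q^{-1}$, $b=-t_0u_0^{-1}q^{-1}$, $c=t_nu_n$, $d=-t_nu_n^{-1}$.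
   Context: $V=\mathbb C^n$, orthonormal basis $e_i$, coordinates $x_i$; $\hbar\in\mathbb C\setminus\pi i\mathbb Q$, $q=e^{\hbar/2}$; $t_0,t_1,t_n,u_0,u_n\in\mathbb C^*$. $g(z;a,b)=\frac{ae^z-a^{-1}}{be^z-b^{-1}}$; $\mathsf T^a_z$ is the shift $z\mapsto z+a$. Koornwinder operator: $M_{-e_1}=\sum_{i=1}^n\sum_{\epsilon=\pm1}(t_0t_n)^{-1}\prod_{j\ne i}g(\epsilon x_i-x_j;t_1,1)g(\epsilon x_i+x_j;t_1,1)\cdot\frac{(1-t_0u_0q^{-1}e^{\epsilon x_i})(1+t_0u_0^{-1}q^{-1}e^{\epsilon x_i})(1-t_nu_ne^{\epsilon x_i})(1+t_nu_n^{-1}e^{\epsilon x_i})}{(1-q^{-2}e^{2\epsilon x_i})(1-e^{2\epsilon x_i})}(\mathsf T^{-\epsilon\hbar}_{x_i}-1)+\kappa_t$, with $\kappa_t=\frac{t_1^n-t_1^{-n}}{t_1-t_1^{-1}}(t_0t_nt_1^{n-1}+t_0^{-1}t_n^{-1}t_1^{1-n})$. Generalized Koornwinder operator, acting on functions of $x_1..x_{N_1},y_1..y_{N_2}$ with parameters $\hbar,\xi,a,b,c,d$, $q=e^{\hbar/2}$, $s=e^{\xi/2}$: $\mathcal M_{N_1,N_2}=\sum_{i\le N_1,\epsilon=\pm1}A_i^\epsilon(\mathsf T^{-\epsilon\hbar}_{x_i}-1)+\frac{1-q^{-2}}{1-s^{-2}}\sum_{\ell\le N_2,\epsilon=\pm1}B_\ell^\epsilon(\mathsf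 T^{-\epsilon\xi}_{y_\ell}-1)$, where $A_i^\epsilon=\prod_{j\ne i}g(\epsilon x_i-x_j;s,1)g(\epsilon x_i+x_j;s,1)\prod_{\ell'}g(\epsilon x_i-y_{\ell'};q^{1/2}s^{1/2},q^{-1/2}s^{1/2})g(\epsilon x_i+y_{\ell'};q^{1/2}s^{1/2},q^{-1/2}s^{1/2})\frac{(1-ae^{\epsilon x_i})(1-be^{\epsilon x_i})(1-ce^{\epsilon x_i})(1-de^{\epsilon x_i})}{(1-q^{-2}e^{2\epsilon x_i})(1-e^{2\epsilon x_i})}$, $B_\ell^\epsilon=\prod_{j}g(\epsilon y_\ell-x_j;q^{1/2}s^{1/2},q^{1/2}s^{-1/2})g(\epsilon y_\ell+x_j;q^{1/2}s^{1/2},q^{1/2}s^{-1/2})\prod_{\ell'\ne\ell}g(\epsilon y_\ell-y_{\ell'};q,1)g(\epsilon y_\ell+y_{\ell'};q,1)\frac{\prod_{p\in\{a,b,c,d\}}(1-pqs^{-1}e^{\epsilon y_\ell})}{(1-s^{-2}e^{2\epsilon y_\ell})(1-e^{2\epsilon y_\ell})}$. Restriction: writing $\mathsf T^{-\epsilon\hbar}_{x_i}=\tau(\epsilon e_i)$ with $(\tau(\lambda)f)(x)=f(x-\hbar\lambda)$, an operator $D=\sum_\lambda g_\lambda\tau(\lambda)$ restricts to $\overline D=\sum_{\lambda'}\big(\sum_{\bar\lambda=\lambda'}g_\lambda\big)|_{\mathcal D_0}\tau(\lambda')$, where $\bar\lambda$ is the orthogonal projection onto $\overline V=\{x:(\alpha,x)=0\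 \forall\alpha\in S_0\}$, provided each restricted coefficient is a well-defined meromorphic function on $\mathcal D_0$. *)

From Stdlib Require Import Reals List ZArith Bool.
Import ListNotations.
Open Scope bool_scope.
Open Scope R_scope.

Record C := mkC { Cre : R ; Cim : R }.
Definition CR (r : R) : C := mkC r 0.
Definition C0 : C := CR 0.
Definition C1 : C := CR 1.
Definition Ci : C := mkC 0 1.
Definition Cnat (n : nat) : C := CR (INR n).
Definition CZ (z : Z) : C := CR (IZR z).
Definition Cadd (z w : C) : C := mkC (Cre z + Cre w) (Cim z + Cim w).
Definition Copp (z : C) : C := mkC (- Cre z) (- Cim z).
Definition Csub (z w : C) : C := Cadd z (Copp w).
Definition Cmul (z w : C) : C :=
  mkC (Cre z * Cre w - Cim z * Cim w) (Cre z * Cim w + Cim z * Cre w).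
Definition Cinv (z : C) : C :=
  let d := Cre z * Cre z + Cim z * Cim z in mkC (Cre z / d) (- Cim z / d).
Definition Cdiv (z w : C) : C := Cmul z (Cinv w).
Definition Cexp (z : C) : C :=
  mkC (exp (Cre z) * cos (Cim z)) (exp (Cre z) * sin (Cim z)).
Fixpoint Cpow (z : C) (n : nat) : C :=
  match n with O => C1 | S p => Cmul z (Cpow z p) end.

Definition Csum {A} (l : list A) (f : A -> C) : C :=
  fold_right (fun a acc => Cadd (f a) acc) C0 l.
Definition Cprod {A} (l : list A) (f : A -> C) : C :=
  fold_right (fun a acc => Cmul (f a) acc) C1 l.
Definition rng (n : nat) : list nat := seq 1 n.
Definition sgnC (e : bool) : C := if e then C1 else Copp C1.
Definition signs : list bool := [true; false].

(* "hbar is not in pi*i*Q":  b*hbar <> a*pi*i for all integers a, b with b <> 0 *)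
Definition not_in_piIQ (h : C) : Prop :=
  forall a b : Z, b <> 0%Z -> Cmul (CZ b) h <> Cmul (CZ a) (mkC 0 PI).

(* g(z;a,b) = (a e^z - a^{-1}) / (b e^z - b^{-1}) *)
Definition gden (z b : C) : C := Csub (Cmul b (Cexp z)) (Cinv b).
Definition gfun (z a b : C) : C := Cdiv (gden z a) (gden z b).

Definition Vec := nat -> C.
Definition unitvec (i : nat) (e : bool) : Vec :=
  fun j => if Nat.eqb j i then sgnC e else C0.
Definition zerovec : Vec := fun _ => C0.

(* A difference operator  D = sum_lambda g_lambda tau(lambda), given as the
   finite list of pairs (lambda, g_lambda), where (tau(lambda) f)(x) = f(x - hbar*lambda). *)
Definition DiffOp := list (Vec * (Vec -> C)).
Definition op_act (hbar : C) (D : DiffOp) (f : Vec -> C) (x : Vec) : C :=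
  Csum D (fun p => Cmul (snd p x) (f (fun j => Csub (x j) (Cmul hbar (fst p j))))).

(* the coefficient of T^{-eps*hbar}_{x_i} (including the factor (t0 tn)^{-1}) *)
Definition K_coef (n : nat) (hbar t0 t1 tn u0 un : C) (i : nat) (e : bool) (x : Vec) : C :=
  let q := Cexp (Cdiv hbar (Cnat 2)) in
  let qi := Cinv q in
  let ex := Cexp (Cmul (sgnC e) (x i)) in
  let e2x := Cexp (Cmul (Cnat 2) (Cmul (sgnC e) (x i))) in
  Cmul (Cinv (Cmul t0 tn))
   (Cmul (Cprod (rng n) (fun j => if Nat.eqb j i then C1 else
            Cmul (gfun (Csub (Cmul (sgnC e) (x i)) (x j)) t1 C1)
                 (gfun (Cadd (Cmul (sgnC e) (x i)) (x j)) t1 C1)))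
    (Cdiv
      (Cmul (Cmul (Csub C1 (Cmul (Cmul (Cmul t0 u0) qi) ex))
                  (Cadd C1 (Cmul (Cmul (Cmul t0 (Cinv u0)) qi) ex)))
            (Cmul (Csub C1 (Cmul (Cmul tn un) ex))
                  (Cadd C1 (Cmul (Cmul tn (Cinv un)) ex))))
      (Cmul (Csub C1 (Cmul (Cmul qi qi) e2x)) (Csub C1 e2x)))).

Definition kappa_t (n : nat) (t0 t1 tn : C) : C :=
  Cmul (Cdiv (Csub (Cpow t1 n) (Cinv (Cpow t1 n))) (Csub t1 (Cinv t1)))
       (Cadd (Cmul (Cmul t0 tn) (Cpow t1 (n - 1)))
             (Cmul (Cinv (Cmul t0 tn)) (Cinv (Cpow t1 (n - 1))))).

(* M_{-e_1} = sum_{i,eps} K_coef_{i,eps} (tau(eps e_i) - 1) + kappa_t, as a formal sum *)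
Definition Koornwinder_op (n : nat) (hbar t0 t1 tn u0 un : C) : DiffOp :=
  flat_map (fun i => map (fun e => (unitvec i e, K_coef n hbar t0 t1 tn u0 un i e)) signs)
           (rng n)
  ++ [(zerovec, fun x => Csub (kappa_t n t0 t1 tn)
         (Csum (rng n) (fun i => Csum signs (fun e => K_coef n hbar t0 t1 tn u0 un i e x))))].

(* points x where all denominators occurring in M_{-e_1} are nonzero *)
Definition K_good (n : nat) (hbar t1 : C) (x : Vec) : Prop :=
  let q := Cexp (Cdiv hbar (Cnat 2)) in
  Csub t1 (Cinv t1) <> C0 /\
  forall i e, In i (rng n) ->
    (forall j, In j (rng n) -> j <> i ->
        gden (Csub (Cmul (sgnC e) (x i)) (x j)) C1 <> C0 /\
        gden (Cadd (Cmul (sgnC e) (x i)) (x j)) C1 <> C0) /\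
    Csub C1 (Cmul (Cinv (Cmul q q)) (Cexp (Cmul (Cnat 2) (Cmul (sgnC e) (x i))))) <> C0 /\
    Csub C1 (Cexp (Cmul (Cnat 2) (Cmul (sgnC e) (x i)))) <> C0.

(* e_j - e_{j+1} is in S_0  iff  j = N1 + k(l-1) + j' with 1 <= l <= m, 1 <= j' <= k-1 *)
Definition inS0 (N1 k m j : nat) : Prop :=
  (N1 < j)%nat /\ (j < N1 + m * k)%nat /\ Nat.modulo (j - N1) k <> 0%nat.
Definition inD0 (N1 k m : nat) (eta1 : C) (x : Vec) : Prop :=
  forall j, inS0 N1 k m j -> Csub (x j) (x (S j)) = eta1.
(* orthogonal projection C^n -> Vbar = {x : (alpha,x)=0 for alpha in S_0}:
   coordinates 1..N1 are kept, each block is replaced by its average *)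
Definition projS0 (N1 k m : nat) (lam : Vec) : Vec :=
  fun j =>
    if (1 <=? j)%nat && (j <=? N1)%nat then lam j
    else if (N1 <? j)%nat && (j <=? N1 + m * k)%nat then
      Cmul (Cinv (Cnat k))
           (Csum (rng k) (fun s => lam (N1 + k * ((j - N1 - 1) / k) + s)%nat))
    else C0.
(* coordinates on D_0: (x_1..x_{N1}) and y_l = (1/k) sum_{s=0}^{k-1} x_{N1+kl-s} (1<=l<=m);
   values outside these index ranges are set to 0 *)
Definition chartD0 (N1 k m : nat) (x : Vec) : Vec * Vec :=
  (fun i => if (1 <=? i)%nat && (i <=? N1)%nat then x i else C0,
   fun l => if (1 <=? l)%nat && (l <=? m)%nat then
              Cmul (Cinv (Cnat k)) (Csum (seq 0 k) (fun s => x (N1 + k * l - s)%nat))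
            else C0).

(* Restriction of D = sum g_lambda tau(lambda) to D_0, acting on functions F of the
   D_0-coordinates:  (Dbar F)(chart x) = sum_lambda g_lambda(x) F(chart(x - hbar*lambdabar)),
   which is sum_{lambda'} (sum_{lambdabar = lambda'} g_lambda)|_{D_0} tau(lambda') F. *)
Definition restr_act (N1 k m : nat) (hbar : C) (D : DiffOp) (F : Vec * Vec -> C) (x : Vec) : C :=
  Csum D (fun p => Cmul (snd p x)
     (F (chartD0 N1 k m (fun j => Csub (x j) (Cmul hbar (projS0 N1 k m (fst p) j)))))).

Definition shift_at (v : Vec) (i : nat) (d : C) : Vec :=
  fun j => if Nat.eqb j i then Csub (v j) d else v j.

Definition A_coef (N1 N2 : nat) (hbar xi a b c d : C) (i : nat) (e : bool) (xs ys : Vec) : C :=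
  let q := Cexp (Cdiv hbar (Cnat 2)) in
  let s := Cexp (Cdiv xi (Cnat 2)) in
  let qh := Cexp (Cdiv hbar (Cnat 4)) in
  let sh := Cexp (Cdiv xi (Cnat 4)) in
  let ex := Cexp (Cmul (sgnC e) (xs i)) in
  let e2x := Cexp (Cmul (Cnat 2) (Cmul (sgnC e) (xs i))) in
  Cmul (Cprod (rng N1) (fun j => if Nat.eqb j i then C1 else
            Cmul (gfun (Csub (Cmul (sgnC e) (xs i)) (xs j)) s C1)
                 (gfun (Cadd (Cmul (sgnC e) (xs i)) (xs j)) s C1)))
  (Cmul (Cprod (rng N2) (fun l =>
            Cmul (gfun (Csub (Cmul (sgnC e) (xs i)) (ys l)) (Cmul qh sh) (Cmul (Cinv qh) sh))
                 (gfun (Cadd (Cmul (sgnC e) (xs i)) (ys l)) (Cmul qh sh) (Cmul (Cinv qh) sh))))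
   (Cdiv (Cprod [a; b; c; d] (fun p => Csub C1 (Cmul p ex)))
         (Cmul (Csub C1 (Cmul (Cinv (Cmul q q)) e2x)) (Csub C1 e2x)))).

Definition B_coef (N1 N2 : nat) (hbar xi a b c d : C) (l : nat) (e : bool) (xs ys : Vec) : C :=
  let q := Cexp (Cdiv hbar (Cnat 2)) in
  let s := Cexp (Cdiv xi (Cnat 2)) in
  let qh := Cexp (Cdiv hbar (Cnat 4)) in
  let sh := Cexp (Cdiv xi (Cnat 4)) in
  let ey := Cexp (Cmul (sgnC e) (ys l)) in
  let e2y := Cexp (Cmul (Cnat 2) (Cmul (sgnC e) (ys l))) in
  Cmul (Cprod (rng N1) (fun j =>
            Cmul (gfun (Csub (Cmul (sgnC e) (ys l)) (xs j)) (Cmul qh sh) (Cmul qh (Cinv sh)))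
                 (gfun (Cadd (Cmul (sgnC e) (ys l)) (xs j)) (Cmul qh sh) (Cmul qh (Cinv sh)))))
  (Cmul (Cprod (rng N2) (fun l' => if Nat.eqb l' l then C1 else
            Cmul (gfun (Csub (Cmul (sgnC e) (ys l)) (ys l')) q C1)
                 (gfun (Cadd (Cmul (sgnC e) (ys l)) (ys l')) q C1)))
   (Cdiv (Cprod [a; b; c; d] (fun p => Csub C1 (Cmul (Cmul (Cmul p q) (Cinv s)) ey)))
         (Cmul (Csub C1 (Cmul (Cinv (Cmul s s)) e2y)) (Csub C1 e2y)))).

Definition genK_act (N1 N2 : nat) (hbar xi a b c d : C) (F : Vec * Vec -> C) (z : Vec * Vec) : C :=
  let xs := fst z in let ys := snd z in
  let q := Cexp (Cdiv hbar (Cnat 2)) in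
  let s := Cexp (Cdiv xi (Cnat 2)) in
  Cadd
   (Csum (rng N1) (fun i => Csum signs (fun e =>
      Cmul (A_coef N1 N2 hbar xi a b c d i e xs ys)
           (Csub (F (shift_at xs i (Cmul (sgnC e) hbar), ys)) (F (xs, ys))))))
   (Cmul (Cdiv (Csub C1 (Cinv (Cmul q q))) (Csub C1 (Cinv (Cmul s s))))
     (Csum (rng N2) (fun l => Csum signs (fun e =>
        Cmul (B_coef N1 N2 hbar xi a b c d l e xs ys)
             (Csub (F (xs, shift_at ys l (Cmul (sgnC e) xi))) (F (xs, ys))))))).

(* points where all denominators occurring in M_{N1,N2} are nonzero *)
Definition M_good (N1 N2 : nat) (hbar xi : C) (z : Vec * Vec) : Prop :=
  let xs := fst z in let ys := snd z in
  let q := Cexp (Cdiv hbar (Cnat 2)) in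
  let s := Cexp (Cdiv xi (Cnat 2)) in
  let qh := Cexp (Cdiv hbar (Cnat 4)) in
  let sh := Cexp (Cdiv xi (Cnat 4)) in
  Csub C1 (Cinv (Cmul s s)) <> C0 /\
  (forall i e, In i (rng N1) ->
    (forall j, In j (rng N1) -> j <> i ->
        gden (Csub (Cmul (sgnC e) (xs i)) (xs j)) C1 <> C0 /\
        gden (Cadd (Cmul (sgnC e) (xs i)) (xs j)) C1 <> C0) /\
    (forall l, In l (rng N2) ->
        gden (Csub (Cmul (sgnC e) (xs i)) (ys l)) (Cmul (Cinv qh) sh) <> C0 /\
        gden (Cadd (Cmul (sgnC e) (xs i)) (ys l)) (Cmul (Cinv qh) sh) <> C0) /\
    Csub C1 (Cmul (Cinv (Cmul q q)) (Cexp (Cmul (Cnat 2) (Cmul (sgnC e) (xs i))))) <> C0 /\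
    Csub C1 (Cexp (Cmul (Cnat 2) (Cmul (sgnC e) (xs i)))) <> C0) /\
  (forall l e, In l (rng N2) ->
    (forall j, In j (rng N1) ->
        gden (Csub (Cmul (sgnC e) (ys l)) (xs j)) (Cmul qh (Cinv sh)) <> C0 /\
        gden (Cadd (Cmul (sgnC e) (ys l)) (xs j)) (Cmul qh (Cinv sh)) <> C0) /\
    (forall l', In l' (rng N2) -> l' <> l ->
        gden (Csub (Cmul (sgnC e) (ys l)) (ys l')) C1 <> C0 /\
        gden (Cadd (Cmul (sgnC e) (ys l)) (ys l')) C1 <> C0) /\
    Csub C1 (Cmul (Cinv (Cmul s s)) (Cexp (Cmul (Cnat 2) (Cmul (sgnC e) (ys l))))) <> C0 /\
    Csub C1 (Cexp (Cmul (Cnat 2) (Cmul (sgnC e) (ys l)))) <> C0).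

(* On D_0 every block of k consecutive coordinates is an arithmetic progression
   x_{b+r} = x_b - r eta1 (b the first index of the block, 0 <= r < k); its average is
   y = x_b - (k-1)/2 eta1, so that e^{x_b} t1 = e^{y} q.
   (1) For an index i and a block not containing i, the product over the block of
       g(eps x_i - x_j; t1, 1) g(eps x_i + x_j; t1, 1) telescopes; the result is the
       factor g(eps x_i -+ y; q^{1/2}s^{1/2}, q^{-1/2}s^{1/2}) (i free) or
       g(eps y_l -+ y; q, 1) (i in another block) of the generalized operator.
   (2) For i inside a block, the coefficient of T^{-eps hbar}_{x_i} contains the factor
       g(-eta1; t1, 1) = 0 unless i is the first index (eps = +1) or the last index
       (eps = -1) of its block; for these two indices the own-block product telescopes
       as well and yields B_l^eps times (1-q^{-2})/(1-s^{-2}).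
   (3) Projecting e_i onto Vbar keeps e_i for free indices and replaces it by the block
       average for block indices, so the shift hbar e_i becomes the shift hbar/k = eta1
       of y_l. *)
From Stdlib Require Import Reals Lra Lia List Arith ZArith Field Ring FunctionalExtensionality Classical Bool.
Import ListNotations.

Lemma C_ext : forall a b : C, Cre a = Cre b -> Cim a = Cim b -> a = b.
Proof. intros [a1 a2] [b1 b2]; simpl; intros -> ->; reflexivity. Qed.

Lemma Cring : ring_theory C0 C1 Cadd Cmul Csub Copp (@eq C).
Proof.
  constructor; intros; apply C_ext; unfold Cadd, Cmul, Csub, Copp, C0, C1, CR; simpl; ring.
Qed.

Lemma C1_neq_C0 : C1 <> C0.
Proof. intro H. injection H. lra. Qed.

Lemma Cfield : field_theory C0 C1 Cadd Cmul Csub Copp Cdiv Cinv (@eq C).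
Proof.
  constructor.
  - exact Cring.
  - exact C1_neq_C0.
  - reflexivity.
  - intros [a b] H. unfold Cinv, Cmul, C1, CR; simpl.
    assert (Hd : a * a + b * b <> 0).
    { intro Hd. apply H. assert (a = 0) by nra. assert (b = 0) by nra. subst. reflexivity. }
    apply C_ext; simpl; field; exact Hd.
Qed.

Add Field Cfld : Cfield.

(* Discharges side conditions of [field]: numeric constants are nonzero. *)
Ltac nonzero_side := repeat split; try (let Hc := fresh in intro Hc; injection Hc; intros; lra);
            auto; try exact C1_neq_C0.

Lemma Cnat_S : forall n, Cnat (S n) = Cadd (Cnat n) C1.
Proof. intros n; apply C_ext; unfold Cnat, Cadd, C1, CR; cbn [Cre Cim]; rewrite ?S_INR; ring. Qed.
Lemma Cnat_0 : Cnat 0 = C0. Proof. reflexivity. Qed.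
Lemma Cnat_neq0 : forall n, n <> O -> Cnat n <> C0.
Proof. intros n Hn H. injection H. intros. apply (not_0_INR n Hn). lra. Qed.
Lemma Cnat_pred : forall k, (1 <= k)%nat -> Cnat (k - 1) = Csub (Cnat k) C1.
Proof. intros k Hk. destruct k; [lia|]. rewrite Cnat_S. replace (S k - 1)%nat with k by lia. ring. Qed.
Lemma Cnat2_neq0 : Cnat 2 <> C0. Proof. apply Cnat_neq0; lia. Qed.
Lemma Cnat4_neq0 : Cnat 4 <> C0. Proof. apply Cnat_neq0; lia. Qed.
Lemma Cnat_2 : Cnat 2 = Cadd C1 C1. Proof. rewrite !Cnat_S, Cnat_0; ring. Qed.
Lemma Cnat_4 : Cnat 4 = Cadd (Cadd C1 C1) (Cadd C1 C1). Proof. rewrite !Cnat_S, Cnat_0; ring. Qed.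
Lemma C2_neq0 : Cadd C1 C1 <> C0. Proof. rewrite <- Cnat_2. exact Cnat2_neq0. Qed.
#[local] Hint Resolve C2_neq0 : core.

Lemma Cexp_add : forall a b, Cexp (Cadd a b) = Cmul (Cexp a) (Cexp b).
Proof.
  intros [a1 a2] [b1 b2]; apply C_ext; unfold Cexp, Cadd, Cmul; simpl;
  rewrite exp_plus, ?cos_plus, ?sin_plus; ring.
Qed.
Lemma Cexp_0 : Cexp C0 = C1.
Proof. apply C_ext; unfold Cexp, C0, C1, CR; simpl; rewrite ?exp_0, ?cos_0, ?sin_0; ring. Qed.
Lemma Cexp_neq0 : forall z, Cexp z <> C0.
Proof.
  intros [a b] H; unfold Cexp, C0, CR in H; injection H; intros H1 H2.
  assert (He : exp a > 0) by apply exp_pos.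
  pose proof (sin2_cos2 b) as Hs. unfold Rsqr in Hs.
  assert (sin b = 0) by (apply Rmult_eq_reg_l with (exp a); lra).
  assert (cos b = 0) by (apply Rmult_eq_reg_l with (exp a); lra).
  nra.
Qed.
Lemma Cexp_opp : forall z, Cexp (Copp z) = Cinv (Cexp z).
Proof.
  intros z. pose proof (Cexp_neq0 z).
  assert (H1 : Cmul (Cexp (Copp z)) (Cexp z) = C1).
  { rewrite <- Cexp_add. replace (Cadd (Copp z) z) with C0 by ring. apply Cexp_0. }
  replace (Cexp (Copp z)) with (Cmul (Cmul (Cexp (Copp z)) (Cexp z)) (Cinv (Cexp z))) by (field; auto).
  rewrite H1. ring.
Qed.
Lemma Cexp_sub : forall a b, Cexp (Csub a b) = Cdiv (Cexp a) (Cexp b).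
Proof. intros. unfold Csub, Cdiv. rewrite Cexp_add, Cexp_opp. reflexivity. Qed.
Lemma Cexp_nat : forall n z, Cexp (Cmul (Cnat n) z) = Cpow (Cexp z) n.
Proof.
  induction n; intros z.
  - rewrite Cnat_0. replace (Cmul C0 z) with C0 by ring. apply Cexp_0.
  - rewrite Cnat_S. replace (Cmul (Cadd (Cnat n) C1) z) with (Cadd z (Cmul (Cnat n) z)) by ring.
    rewrite Cexp_add, IHn. reflexivity.
Qed.
Lemma Cexp_2 : forall z, Cexp (Cmul (Cnat 2) z) = Cmul (Cexp z) (Cexp z).
Proof. intros. rewrite <- Cexp_add. f_equal. rewrite !Cnat_S, Cnat_0. ring. Qed.
Lemma Cexp_half_sq : forall w, Cmul (Cexp (Cdiv w (Cnat 2))) (Cexp (Cdiv w (Cnat 2))) = Cexp w.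
Proof. intros. rewrite <- Cexp_add. f_equal. rewrite Cnat_2. field. apply C2_neq0. Qed.
Lemma Cexp_inv_mul : forall a b, Cmul (Cinv (Cexp a)) (Cexp b) = Cexp (Csub b a).
Proof. intros. rewrite Cexp_sub. unfold Cdiv. ring. Qed.
Lemma Cexp_mul_inv : forall a b, Cmul (Cexp a) (Cinv (Cexp b)) = Cexp (Csub a b).
Proof. intros. rewrite Cexp_sub. reflexivity. Qed.
Lemma Cexp_sgn_true : forall z, Cexp (Cmul (sgnC true) z) = Cexp z.
Proof. intros; simpl; f_equal; ring. Qed.
Lemma Cexp_sgn_false : forall z, Cexp (Cmul (sgnC false) z) = Cinv (Cexp z).
Proof. intros; simpl. rewrite <- Cexp_opp; f_equal; ring. Qed.

(* C is an integral domain; inversion is multiplicative (with the convention 1/0 = 0). *)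
Lemma Cmul_integral : forall a b, Cmul a b = C0 -> a = C0 \/ b = C0.
Proof.
  intros a b H. destruct (classic (a = C0)) as [Ha|Ha]; [left; exact Ha|right].
  replace b with (Cmul (Cinv a) (Cmul a b)) by (field; exact Ha).
  rewrite H; ring.
Qed.
Lemma Cmul_neq0 : forall a b, a <> C0 -> b <> C0 -> Cmul a b <> C0.
Proof. intros a b Ha Hb H; destruct (Cmul_integral _ _ H); auto. Qed.
Lemma Cpow_neq0 : forall z n, z <> C0 -> Cpow z n <> C0.
Proof.
  intros z n Hz; induction n; simpl.
  - exact C1_neq_C0.
  - apply Cmul_neq0; auto.
Qed.
Lemma Cinv_neq0 : forall a, a <> C0 -> Cinv a <> C0.
Proof. intros a Ha H. apply C1_neq_C0. replace C1 with (Cmul a (Cinv a)) by (field; auto). rewrite H; ring. Qed.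
Lemma Cinv_0 : Cinv C0 = C0.
Proof. apply C_ext; unfold Cinv, C0, CR; cbn [Cre Cim]; unfold Rdiv; ring. Qed.
Lemma Cinv_C1 : Cinv C1 = C1.
Proof. field. exact C1_neq_C0. Qed.
Lemma Cinv_mul : forall a b, Cinv (Cmul a b) = Cmul (Cinv a) (Cinv b).
Proof.
  intros a b. destruct (classic (a = C0)) as [Ha|Ha].
  - subst. replace (Cmul C0 b) with C0 by ring. rewrite Cinv_0; ring.
  - destruct (classic (b = C0)) as [Hb|Hb].
    + subst. replace (Cmul a C0) with C0 by ring. rewrite Cinv_0; ring.
    + field. auto.
Qed.
Lemma Cpow_inv : forall a n, Cpow (Cinv a) n = Cinv (Cpow a n).
Proof.
  intros a n; induction n; simpl. field. exact C1_neq_C0.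
  rewrite IHn, Cinv_mul. reflexivity.
Qed.
Lemma Cpow_S : forall a r, Cpow a (S r) = Cmul a (Cpow a r).
Proof. reflexivity. Qed.
Lemma Csub_eq_solve : forall a b e : C, Csub a b = e -> b = Csub a e.
Proof. intros a b e E. rewrite <- E. ring. Qed.
Lemma Cdiv_scale : forall a b a' b' l, l <> C0 -> a' = Cmul l a -> b' = Cmul l b ->
  Cdiv a' b' = Cdiv a b.
Proof.
  intros a b a' b' l Hl -> ->. unfold Cdiv. rewrite Cinv_mul.
  replace (Cmul (Cmul l a) (Cmul (Cinv l) (Cinv b))) with (Cmul (Cmul l (Cinv l)) (Cmul a (Cinv b))) by ring.
  replace (Cmul l (Cinv l)) with C1 by (field; auto). ring.
Qed.
Lemma Cdiv_split : forall l1 l2 A B, Cdiv (Cmul l1 A) (Cmul l2 B) = Cmul (Cdiv l1 l2) (Cdiv A B).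
Proof. intros. unfold Cdiv. rewrite Cinv_mul. ring. Qed.

Lemma Csum_app : forall {A} (l1 l2 : list A) f, Csum (l1 ++ l2) f = Cadd (Csum l1 f) (Csum l2 f).
Proof. intros A l1 l2 f; induction l1; simpl; [ring| rewrite IHl1; ring]. Qed.
Lemma Cprod_app : forall {A} (l1 l2 : list A) f, Cprod (l1 ++ l2) f = Cmul (Cprod l1 f) (Cprod l2 f).
Proof. intros A l1 l2 f; induction l1; simpl; [ring| rewrite IHl1; ring]. Qed.
Lemma Csum_ext : forall {A} (l : list A) f g, (forall a, In a l -> f a = g a) -> Csum l f = Csum l g.
Proof. intros A l f g H; induction l as [|b l IH]; simpl; auto. f_equal; [apply H; simpl; auto| apply IH; intros; apply H; simpl; auto]. Qed.
Lemma Cprod_ext : forall {A} (l : list A) f g, (forall a, In a l -> f a = g a) -> Cprod l f = Cprod l g.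
Proof. intros A l f g H; induction l as [|b l IH]; simpl; auto. f_equal; [apply H; simpl; auto| apply IH; intros; apply H; simpl; auto]. Qed.
Lemma Csum_add : forall {A} (l : list A) f g,
  Csum l (fun a => Cadd (f a) (g a)) = Cadd (Csum l f) (Csum l g).
Proof. intros A l f g; induction l; simpl; [ring| rewrite IHl; ring]. Qed.
Lemma Csum_sub : forall {A} (l : list A) f g,
  Csum l (fun a => Csub (f a) (g a)) = Csub (Csum l f) (Csum l g).
Proof. intros A l f g; induction l; simpl; [ring| rewrite IHl; ring]. Qed.
Lemma Csum_scal : forall {A} (l : list A) c f,
  Csum l (fun a => Cmul c (f a)) = Cmul c (Csum l f).
Proof. intros A l c f; induction l; simpl; [ring| rewrite IHl; ring]. Qed.
Lemma Csum_scal_r : forall {A} (l : list A) c f,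
  Csum l (fun a => Cmul (f a) c) = Cmul (Csum l f) c.
Proof. intros A l c f; induction l; simpl; [ring| rewrite IHl; ring]. Qed.
Lemma Csum_zero : forall {A} (l : list A) f, (forall a, In a l -> f a = C0) -> Csum l f = C0.
Proof. intros A l f H; induction l as [|b l IH]; simpl; auto. rewrite (H b), IH; [ring| |]; intros; try apply H; simpl; auto. Qed.
Lemma Cprod_mul : forall {A} (l : list A) f g,
  Cprod l (fun a => Cmul (f a) (g a)) = Cmul (Cprod l f) (Cprod l g).
Proof. intros A l f g; induction l; simpl; [ring| rewrite IHl; ring]. Qed.
Lemma Csum_flat_map : forall {A B} (h : A -> list B) l f,
  Csum (flat_map h l) f = Csum l (fun a => Csum (h a) f).
Proof. intros A B h l f; induction l; simpl; auto. rewrite Csum_app, IHl; auto. Qed.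
Lemma Cprod_flat_map : forall {A B} (h : A -> list B) l f,
  Cprod (flat_map h l) f = Cprod l (fun a => Cprod (h a) f).
Proof. intros A B h l f; induction l; simpl; auto. rewrite Cprod_app, IHl; auto. Qed.
Lemma Csum_map : forall {A B} (h : A -> B) l f, Csum (map h l) f = Csum l (fun a => f (h a)).
Proof. intros A B h l f; induction l; simpl; auto. rewrite IHl; auto. Qed.
Lemma Cprod_zero : forall {A} (l : list A) f a, In a l -> f a = C0 -> Cprod l f = C0.
Proof.
  intros A l f a Hin H; induction l; simpl in *; [contradiction|].
  destruct Hin as [<-|Hin]; [rewrite H; ring| rewrite IHl; auto; ring].
Qed.
Lemma Cprod_pull : forall (l : list nat) (a : nat) u f, NoDup l -> In a l ->
  Cprod l (fun b => if Nat.eqb b a then u else f b)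
  = Cmul u (Cprod l (fun b => if Nat.eqb b a then C1 else f b)).
Proof.
  intros l a u f Hnd Hin; induction l as [|b l IH]; simpl in *; [contradiction|].
  inversion Hnd; subst.
  destruct Hin as [<-|Hin].
  - rewrite Nat.eqb_refl.
    assert (E1 : forall v, Cprod l (fun c => if Nat.eqb c b then v else f c) = Cprod l f).
    { intros v; apply Cprod_ext. intros c Hc; destruct (Nat.eqb_spec c b); [subst; contradiction| auto]. }
    rewrite !E1. ring.
  - destruct (Nat.eqb_spec b a); [subst; contradiction|].
    rewrite IH; auto; ring.
Qed.
Lemma Csum_seq_shift : forall s t c f,
  Csum (seq (s + t) c) f = Csum (seq t c) (fun r => f (s + r)%nat).
Proof.
  intros s t c f; revert t; induction c; intros t; simpl; auto.
  rewrite <- IHc. replace (S (s + t)) with (s + S t)%nat by lia. reflexivity.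
Qed.
Lemma Cprod_seq_shift : forall s t c f,
  Cprod (seq (s + t) c) f = Cprod (seq t c) (fun r => f (s + r)%nat).
Proof.
  intros s t c f; revert t; induction c; intros t; simpl; auto.
  rewrite <- IHc. replace (S (s + t)) with (s + S t)%nat by lia. reflexivity.
Qed.
Lemma Csum_cons : forall {A} (a : A) l f, Csum (a :: l) f = Cadd (f a) (Csum l f).
Proof. reflexivity. Qed.
Lemma Cprod_cons : forall {A} (a : A) l f, Cprod (a :: l) f = Cmul (f a) (Cprod l f).
Proof. reflexivity. Qed.
Lemma Csum_const : forall {A} (l : list A) v, Csum l (fun _ => v) = Cmul (Cnat (length l)) v.
Proof. intros A l v; induction l; simpl length; [rewrite Cnat_0; simpl; ring|rewrite Csum_cons, IHl, Cnat_S; ring]. Qed.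

Lemma Csum_indicator : forall B j v c a,
  Csum (seq a c) (fun s => if Nat.eqb (B + s) j then v else C0)
  = if ((B + a <=? j) && (j <? B + a + c))%nat then v else C0.
Proof.
  intros B j v c; induction c as [|c IH]; intros a.
  - simpl. destruct (Nat.leb_spec (B + a) j), (Nat.ltb_spec j (B + a + 0)); simpl; reflexivity || lia.
  - cbn [seq]. rewrite Csum_cons, IH.
    destruct (Nat.eqb_spec (B + a) j), (Nat.leb_spec (B + S a) j), (Nat.ltb_spec j (B + S a + c)),
             (Nat.leb_spec (B + a) j), (Nat.ltb_spec j (B + a + S c)); simpl; try lia; ring.
Qed.

Lemma telescope_up : forall (al : nat -> C) u a c,
  (forall r, (a <= r < a + c)%nat -> al r <> C0) ->
  Cmul (Cprod (seq a c) (fun r => Cmul (Cmul u (al (S r))) (Cinv (al r)))) (al a)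
  = Cmul (Cpow u c) (al (a + c)%nat).
Proof.
  intros al u a c; revert a; induction c; intros a H; simpl.
  - rewrite Nat.add_0_r; ring.
  - assert (Ha : al a <> C0) by (apply H; lia).
    replace (a + S c)%nat with (S a + c)%nat by lia.
    transitivity (Cmul u (Cmul (Cpow u c) (al (S a + c)%nat))); [|ring].
    rewrite <- IHc by (intros r Hr; apply H; lia).
    field. auto.
Qed.
Lemma telescope_down : forall (al : nat -> C) u a c,
  (forall r, (a < r <= a + c)%nat -> al r <> C0) ->
  Cmul (Cprod (seq a c) (fun r => Cmul (Cmul u (al r)) (Cinv (al (S r))))) (al (a + c)%nat)
  = Cmul (Cpow u c) (al a).
Proof.
  intros al u a c; revert a; induction c; intros a H; simpl.
  - rewrite Nat.add_0_r; ring.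
  - assert (Ha : al (S a) <> C0) by (apply H; lia).
    replace (a + S c)%nat with (S a + c)%nat by lia.
    transitivity (Cmul (Cmul (Cmul u (al a)) (Cinv (al (S a))))
       (Cmul (Cprod (seq (S a) c) (fun r => Cmul (Cmul u (al r)) (Cinv (al (S r))))) (al (S a + c)%nat))).
    { ring. }
    rewrite IHc by (intros r Hr; apply H; lia).
    field. auto.
Qed.

(* Splitting a double sum of a*b against a constant c; used to isolate the (T - 1) form. *)
Lemma Csum2_split_const : forall {A B} (l1 : list A) (l2 : list B) (a b : A -> B -> C) c,
  Csum l1 (fun i => Csum l2 (fun e => Cmul (a i e) (b i e)))
  = Cadd (Csum l1 (fun i => Csum l2 (fun e => Cmul (a i e) (Csub (b i e) c))))
         (Cmul (Csum l1 (fun i => Csum l2 (fun e => a i e))) c).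
Proof.
  intros. rewrite <- Csum_scal_r, <- Csum_add. apply Csum_ext. intros i _.
  rewrite <- Csum_scal_r, <- Csum_add. apply Csum_ext. intros e _. ring.
Qed.

Lemma Csum_signs : forall (f : bool -> C), Csum signs f = Cadd (f true) (f false).
Proof. intros. unfold signs. simpl. ring. Qed.
Lemma Csum_signs_swap : forall {A} (l : list A) (g : A -> bool -> C),
  Csum l (fun j => Csum signs (fun e => g j e)) = Cadd (Csum l (fun j => g j true)) (Csum l (fun j => g j false)).
Proof. intros. rewrite <- Csum_add. apply Csum_ext. intros. apply Csum_signs. Qed.

(* The index range 1..n splits into the free indices 1..N1 followed by m blocks of
   k consecutive indices; block l (1 <= l <= m) is N1 + k(l-1) + 1, ..., N1 + k l. *)
Lemma seq_blocks : forall k a m,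
  seq (a + 1) (m * k) = flat_map (fun l => seq (a + k * (l - 1) + 1) k) (seq 1 m).
Proof.
  intros k a m; induction m.
  - reflexivity.
  - rewrite seq_S, flat_map_app, <- IHm. simpl flat_map.
    rewrite app_nil_r.
    replace (S m * k)%nat with (m * k + k)%nat by lia.
    rewrite seq_app. f_equal. f_equal. nia.
Qed.

Lemma rng_split : forall n k m, (m * k <= n)%nat ->
  rng n = rng (n - m * k) ++ flat_map (fun l => seq ((n - m*k) + k * (l - 1) + 1) k) (rng m).
Proof.
  intros n k m H. unfold rng.
  rewrite <- seq_blocks.
  replace n with ((n - m * k) + m * k)%nat at 1 by lia.
  rewrite seq_app. f_equal. f_equal. lia.
Qed.

Lemma in_rng_iff : forall j N, In j (rng N) <-> (1 <= j <= N)%nat.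
Proof. intros. unfold rng. rewrite in_seq. lia. Qed.

Lemma block_end_le : forall N1 k m l, (1 <= l <= m)%nat ->
  (N1 + k * (l - 1) + k <= N1 + m * k)%nat.
Proof. intros N1 k m l Hl. destruct l; [lia|]. replace (S l - 1)%nat with l by lia. nia. Qed.

Lemma block_index_inj : forall N1 k l l' r r', (1 <= l)%nat -> (1 <= l')%nat ->
  (r < k)%nat -> (r' < k)%nat ->
  (N1 + k * (l - 1) + 1 + r = N1 + k * (l' - 1) + 1 + r')%nat -> l = l'.
Proof.
  intros N1 k l l' r r' Hl Hl' Hr Hr' E.
  destruct (Nat.lt_total l l') as [Hlt|[Heq|Hlt]]; auto; exfalso.
  - assert (k * l <= k * (l' - 1))%nat by (apply Nat.mul_le_mono_l; lia). nia.
  - assert (k * l' <= k * (l - 1))%nat by (apply Nat.mul_le_mono_l; lia). nia.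
Qed.

Lemma divmod_succ : forall k p, (0 < k)%nat -> ((p + 1) mod k <> 0)%nat -> ((p + 1) / k = p / k /\ (p + 1) mod k = p mod k + 1)%nat.
Proof.
  intros k p Hk H.
  pose proof (Nat.div_mod_eq p k) as E. pose proof (Nat.mod_upper_bound p k ltac:(lia)) as U.
  destruct (Nat.eq_dec (p mod k + 1) k) as [Ek|Ek].
  - exfalso. apply H. replace (p + 1)%nat with ((p / k + 1) * k)%nat by nia.
    apply Nat.Div0.mod_mul.
  - split.
    + symmetry. apply Nat.div_unique with (p mod k + 1)%nat; lia.
    + symmetry. apply Nat.mod_unique with (p / k)%nat; lia.
Qed.

Lemma block_div_mod : forall k N1 l r, (r < k)%nat ->
  ((N1 + k * l + 1 + r - N1 - 1) / k = l)%nat /\ ((N1 + k * l + 1 + r - N1 - 1) mod k = r)%nat.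
Proof.
  intros k N1 l r Hr.
  replace (N1 + k * l + 1 + r - N1 - 1)%nat with (k * l + r)%nat by lia.
  split.
  - symmetry; apply Nat.div_unique with r; lia.
  - symmetry; apply Nat.mod_unique with l; lia.
Qed.

Lemma D0_block_progression : forall N1 k m eta x, inD0 N1 k m eta x ->
  forall l r, (1 <= l <= m)%nat -> (r < k)%nat ->
  x (N1 + k * (l - 1) + 1 + r)%nat
  = Csub (x (N1 + k * (l - 1) + 1)%nat) (Cmul (Cnat r) eta).
Proof.
  intros N1 k m eta x HD l r Hl. induction r as [|r IHr]; intros Hr.
  - rewrite Nat.add_0_r, Cnat_0. ring.
  - assert (HS : inS0 N1 k m (N1 + k * (l - 1) + 1 + r)%nat).
    { unfold inS0. pose proof (block_end_le N1 k m l Hl). split; [nia|]. split; [lia|].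
      replace (N1 + k * (l - 1) + 1 + r - N1)%nat with ((1 + r) + (l-1) * k)%nat by nia.
      rewrite Nat.Div0.mod_add, Nat.mod_small by lia. lia. }
    pose proof (HD _ HS) as E.
    replace (N1 + k * (l - 1) + 1 + S r)%nat with (S (N1 + k * (l - 1) + 1 + r)) by nia.
    rewrite IHr in E by lia.
    apply Csub_eq_solve in E. rewrite E, Cnat_S. ring.
Qed.

Lemma sum_descending : forall c, Cmul (Cnat 2) (Csum (seq 0 c) (fun s => Cnat (c - 1 - s)))
  = Cmul (Cnat c) (Csub (Cnat c) C1).
Proof.
  induction c as [|c IHc].
  - simpl. rewrite Cnat_0. ring.
  - change (seq 0 (S c)) with (0 :: seq (1 + 0) c)%nat.
    rewrite Csum_cons, Csum_seq_shift.
    rewrite (Csum_ext _ _ (fun s => Cnat (c - 1 - s))) by (intros a _; f_equal; lia).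
    transitivity (Cadd (Cmul (Cnat 2) (Cnat (S c - 1 - 0)))
                       (Cmul (Cnat 2) (Csum (seq 0 c) (fun s : nat => Cnat (c - 1 - s))))); [ring|].
    rewrite IHc. replace (S c - 1 - 0)%nat with c by lia. rewrite !Cnat_S, Cnat_0. ring.
Qed.

Lemma chart_block_average : forall N1 k m eta x, (1 <= k)%nat -> inD0 N1 k m eta x ->
  forall l, (1 <= l <= m)%nat ->
  snd (chartD0 N1 k m x) l
  = Csub (x (N1 + k * (l - 1) + 1)%nat) (Cmul (Cdiv (Cnat (k - 1)) (Cnat 2)) eta).
Proof.
  intros N1 k m eta x Hk HD l Hl.
  unfold chartD0; cbv beta iota delta [snd].
  replace ((1 <=? l)%nat && (l <=? m)%nat)%bool with true
    by (symmetry; apply andb_true_intro; split; apply Nat.leb_le; lia).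
  rewrite (Csum_ext _ _ (fun s => Csub (x (N1 + k * (l - 1) + 1)%nat) (Cmul (Cnat (k - 1 - s)) eta))).
  2:{ intros s Hs. apply in_seq in Hs.
      transitivity (x (N1 + k*(l-1) + 1 + (k-1-s))%nat);
        [f_equal; nia| apply (D0_block_progression N1 k m); auto; lia]. }
  rewrite Csum_sub, Csum_const, length_seq, Csum_scal_r.
  assert (HS : Csum (seq 0 k) (fun s => Cnat (k - 1 - s))
               = Cdiv (Cmul (Cnat k) (Csub (Cnat k) C1)) (Cnat 2)).
  { rewrite <- sum_descending. field. exact Cnat2_neq0. }
  rewrite HS, Cnat_pred by lia.
  assert (Hk0 : Cnat k <> C0) by (apply Cnat_neq0; lia).
  field. split; auto. exact Cnat2_neq0.
Qed.

Lemma projS0_block : forall N1 k m lam l s, (1 <= l <= m)%nat -> (s < k)%nat ->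
  projS0 N1 k m lam (N1 + k * l - s)%nat
  = Cmul (Cinv (Cnat k)) (Csum (rng k) (fun s' => lam (N1 + k * (l - 1) + s')%nat)).
Proof.
  intros N1 k m lam l s Hl Hs. unfold projS0.
  destruct (Nat.leb_spec 1 (N1 + k * l - s)), (Nat.leb_spec (N1 + k * l - s) N1); try nia; simpl.
  destruct (Nat.ltb_spec N1 (N1 + k * l - s)), (Nat.leb_spec (N1 + k * l - s) (N1 + m * k));
    try nia; simpl.
  replace ((N1 + k * l - s - N1 - 1) / k)%nat with (l - 1)%nat; [reflexivity|].
  apply Nat.div_unique with (k - 1 - s)%nat; [lia|].
  destruct l as [|l]; [lia|]. replace (S l - 1)%nat with l by lia. nia.
Qed.

Lemma block_unit_sum : forall N1 k l l' r (e : bool), (1 <= l)%nat -> (1 <= l')%nat -> (r < k)%nat ->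
  Csum (rng k) (fun s => unitvec (N1 + k * (l - 1) + 1 + r) e (N1 + k * (l' - 1) + s)%nat)
  = if Nat.eqb l' l then sgnC e else C0.
Proof.
  intros N1 k l l' r e Hl Hl' Hr. unfold unitvec, rng. rewrite Csum_indicator.
  set (j := (N1 + k * (l - 1) + 1 + r)%nat).
  destruct (Nat.eqb_spec l' l) as [->|Hne].
  - destruct (Nat.leb_spec (N1 + k * (l - 1) + 1) j), (Nat.ltb_spec j (N1 + k * (l - 1) + 1 + k));
      unfold j in *; simpl; reflexivity || lia.
  - destruct (Nat.leb_spec (N1 + k * (l' - 1) + 1) j), (Nat.ltb_spec j (N1 + k * (l' - 1) + 1 + k));
      simpl; try reflexivity.
    exfalso. apply Hne. symmetry.
    apply (block_index_inj N1 k l l' r (j - (N1 + k * (l' - 1) + 1))); unfold j in *; lia.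
Qed.

(* Charts of the shifted points x - hbar * (projection of lambda) for the three kinds
   of lambda occurring in M_{-e_1}: zero, +-e_i with i free, +-e_j with j in block l. *)
Lemma chart_zero : forall N1 k m hbar x,
  chartD0 N1 k m (fun j => Csub (x j) (Cmul hbar (projS0 N1 k m zerovec j))) = chartD0 N1 k m x.
Proof.
  intros. f_equal. apply functional_extensionality. intros p.
  unfold projS0, zerovec.
  destruct ((1 <=? p) && (p <=? N1))%nat; [ring|].
  destruct ((N1 <? p) && (p <=? N1 + m * k))%nat; [|ring].
  rewrite Csum_zero by auto. ring.
Qed.

Lemma chart_shift_x : forall N1 k m hbar x i (e : bool), (1 <= i <= N1)%nat ->
  chartD0 N1 k m (fun j => Csub (x j) (Cmul hbar (projS0 N1 k m (unitvec i e) j)))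
  = (shift_at (fst (chartD0 N1 k m x)) i (Cmul (sgnC e) hbar), snd (chartD0 N1 k m x)).
Proof.
  intros N1 k m hbar x i e Hi.
  unfold chartD0 at 1. f_equal.
  - apply functional_extensionality. intros p. unfold shift_at, chartD0; cbv beta iota delta [fst].
    unfold projS0, unitvec.
    destruct (Nat.leb_spec 1 p), (Nat.leb_spec p N1), (Nat.eqb_spec p i); simpl;
      try ring; try reflexivity; lia.
  - apply functional_extensionality. intros l. unfold chartD0; cbv beta iota delta [snd].
    destruct (Nat.leb_spec 1 l), (Nat.leb_spec l m); simpl; try reflexivity.
    f_equal. apply Csum_ext. intros s Hs. apply in_seq in Hs.
    rewrite projS0_block by lia. rewrite Csum_zero; [ring|].
    intros s' Hs'. unfold rng in Hs'. apply in_seq in Hs'.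
    unfold unitvec. destruct (Nat.eqb_spec (N1 + k * (l - 1) + s') i); [nia|reflexivity].
Qed.

Lemma chart_shift_y : forall N1 k m eta hbar x l r (e : bool), (1 <= l <= m)%nat -> (r < k)%nat ->
  hbar = Cmul (Cnat k) eta ->
  chartD0 N1 k m (fun p => Csub (x p) (Cmul hbar (projS0 N1 k m (unitvec (N1 + k * (l - 1) + 1 + r) e) p)))
  = (fst (chartD0 N1 k m x), shift_at (snd (chartD0 N1 k m x)) l (Cmul (sgnC e) eta)).
Proof.
  intros N1 k m eta hbar x l r e Hl Hr Hh.
  unfold chartD0 at 1. f_equal.
  - apply functional_extensionality. intros p. unfold chartD0; cbv beta iota delta [fst].
    unfold projS0, unitvec.
    destruct (Nat.leb_spec 1 p), (Nat.leb_spec p N1); simpl; try reflexivity.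
    destruct (Nat.eqb_spec p (N1 + k * (l - 1) + 1 + r)); [nia| ring].
  - apply functional_extensionality. intros l'. unfold shift_at, chartD0; cbv beta iota delta [snd].
    destruct (Nat.leb_spec 1 l'), (Nat.leb_spec l' m); simpl;
      [| destruct (Nat.eqb_spec l' l); [lia|reflexivity] ..].
    rewrite (Csum_ext _ _ (fun s => Csub (x (N1 + k * l' - s)%nat)
               (Cmul hbar (Cmul (Cinv (Cnat k)) (if Nat.eqb l' l then sgnC e else C0))))).
    2:{ intros s Hs. apply in_seq in Hs.
        rewrite projS0_block, block_unit_sum by lia. reflexivity. }
    rewrite Csum_sub, Csum_const, length_seq.
    assert (Hk0 : Cnat k <> C0) by (apply Cnat_neq0; lia).
    destruct (Nat.eqb_spec l' l); subst hbar; field; auto.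
Qed.

(* Let v be a sequence
   with e^{v r} = W T^{-r}, T = t^2.  Then, writing Z = e^z,
     g(z - v r; t, 1) = t^{-1} den_minus (r+1) / den_minus r,
     g(z + v r; t, 1) = t^{-1} den_plus r / den_plus (r+1),
   so the product of g(z - v r) g(z + v r) over a range of r telescopes. *)
Section GTelescope.
Variables (t T Z W : C) (v : nat -> C) (z : C).
Hypothesis Ht : t <> C0.
Hypothesis HT : T = Cmul t t.
Hypothesis HW : W <> C0.
Hypothesis HZ : Cexp z = Z.

Definition den_minus (r : nat) : C := Csub (Cmul (Cmul Z (Cinv W)) (Cpow T r)) C1.
Definition den_plus (r : nat) : C := Csub (Cmul (Cmul (Cmul Z W) T) (Cinv (Cpow T r))) C1.

Lemma T_neq0 : T <> C0.
Proof. rewrite HT. apply Cmul_neq0; auto. Qed.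

Lemma gden_minus : forall r, Cexp (v r) = Cmul W (Cinv (Cpow T r)) ->
  gden (Csub z (v r)) C1 = den_minus r.
Proof.
  intros r Hv. unfold gden, den_minus. rewrite Cexp_sub, HZ, Hv, Cinv_C1.
  pose proof (Cpow_neq0 T r T_neq0). unfold Cdiv. field. auto.
Qed.
Lemma gden_plus : forall r, Cexp (v r) = Cmul W (Cinv (Cpow T r)) ->
  gden (Cadd z (v r)) C1 = den_plus (S r).
Proof.
  intros r Hv. unfold gden, den_plus. rewrite Cexp_add, HZ, Hv, Cinv_C1, Cpow_S.
  pose proof (Cpow_neq0 T r T_neq0). pose proof T_neq0. field. auto.
Qed.
Lemma gfun_minus : forall r, Cexp (v r) = Cmul W (Cinv (Cpow T r)) ->
  gfun (Csub z (v r)) t C1 = Cmul (Cmul (Cinv t) (den_minus (S r))) (Cinv (den_minus r)).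
Proof.
  intros r Hv. unfold gfun, Cdiv at 1. rewrite (gden_minus r Hv). f_equal.
  unfold gden, den_minus. rewrite Cexp_sub, HZ, Hv, Cpow_S, HT.
  pose proof (Cpow_neq0 T r T_neq0). rewrite HT in *. unfold Cdiv. field. auto.
Qed.
Lemma gfun_plus : forall r, Cexp (v r) = Cmul W (Cinv (Cpow T r)) ->
  gfun (Cadd z (v r)) t C1 = Cmul (Cmul (Cinv t) (den_plus r)) (Cinv (den_plus (S r))).
Proof.
  intros r Hv. unfold gfun, Cdiv at 1. rewrite (gden_plus r Hv). f_equal.
  unfold gden, den_plus. rewrite Cexp_add, HZ, Hv, HT.
  pose proof (Cpow_neq0 T r T_neq0). rewrite HT in *. field. auto.
Qed.

Lemma block_telescope : forall a c,
  (forall r, (a <= r < a + c)%nat -> Cexp (v r) = Cmul W (Cinv (Cpow T r))) ->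
  (forall r, (a <= r < a + c)%nat -> den_minus r <> C0) ->
  (forall r, (a < r <= a + c)%nat -> den_plus r <> C0) ->
  Cmul (Cmul (Cprod (seq a c) (fun r => Cmul (gfun (Csub z (v r)) t C1) (gfun (Cadd z (v r)) t C1)))
     (den_minus a)) (den_plus (a + c)%nat)
  = Cmul (Cmul (Cpow (Cinv t) c) (den_minus (a + c)%nat)) (Cmul (Cpow (Cinv t) c) (den_plus a)).
Proof.
  intros a c Hv Ha Hb.
  rewrite (Cprod_ext _ _ (fun r => Cmul (Cmul (Cmul (Cinv t) (den_minus (S r))) (Cinv (den_minus r)))
                                      (Cmul (Cmul (Cinv t) (den_plus r)) (Cinv (den_plus (S r)))))).
  2:{ intros r Hr. apply in_seq in Hr. rewrite gfun_minus, gfun_plus by (apply Hv; lia). reflexivity. }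
  rewrite Cprod_mul.
  rewrite <- (telescope_up den_minus (Cinv t) a c Ha), <- (telescope_down den_plus (Cinv t) a c Hb).
  ring.
Qed.
End GTelescope.

(* The exponential parameters: sh = s^{1/2}, t1 = s, Texp = s^2 (functions of eta)
   and qh = q^{1/2}, q (functions of hbar); with hbar = k eta we have q = t1^k. *)
Section Params.
Variables (k : nat) (eta hbar : C).
Hypothesis Hk : (1 <= k)%nat.
Hypothesis Hh : hbar = Cmul (Cnat k) eta.

Definition sh := Cexp (Cdiv eta (Cnat 4)).
Definition t1 := Cexp (Cdiv eta (Cnat 2)).
Definition qh := Cexp (Cdiv hbar (Cnat 4)).
Definition q := Cexp (Cdiv hbar (Cnat 2)).
Definition Texp := Cexp eta.

Lemma t1_sh : t1 = Cmul sh sh.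
Proof. unfold t1, sh. rewrite <- Cexp_add. f_equal. pose proof Cnat2_neq0. pose proof Cnat4_neq0.
  rewrite Cnat_4 in *; rewrite Cnat_2 in *. field; nonzero_side. Qed.
Lemma q_qh : q = Cmul qh qh.
Proof. unfold q, qh. rewrite <- Cexp_add. f_equal. pose proof Cnat2_neq0. pose proof Cnat4_neq0.
  rewrite Cnat_4 in *; rewrite Cnat_2 in *. field; nonzero_side. Qed.
Lemma Texp_t1 : Texp = Cmul t1 t1.
Proof. unfold Texp, t1. rewrite <- Cexp_add. f_equal. pose proof Cnat2_neq0.
  rewrite Cnat_2 in *. field; nonzero_side. Qed.
Lemma q_t1 : q = Cpow t1 k.
Proof. unfold q, t1. rewrite <- Cexp_nat. f_equal. rewrite Hh. pose proof Cnat2_neq0.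
  rewrite Cnat_2 in *. field; nonzero_side. Qed.
Lemma Texp_pow_k : Cpow Texp k = Cmul q q.
Proof. unfold Texp, q. rewrite <- Cexp_nat, <- Cexp_add. f_equal. rewrite Hh. pose proof Cnat2_neq0.
  rewrite Cnat_2 in *. field; nonzero_side. Qed.
Lemma t1_pow_pred : Cmul (Cpow t1 (k - 1)) t1 = q.
Proof. rewrite q_t1. destruct k as [|k']; [lia|]. replace (S k' - 1)%nat with k' by lia. simpl. ring. Qed.
Lemma inv_t1_pow_pred : Cpow (Cinv t1) (k - 1) = Cdiv t1 q.
Proof. rewrite Cpow_inv, <- t1_pow_pred. unfold t1 at 1. pose proof (Cexp_neq0 (Cdiv eta (Cnat 2))).
  fold t1 in *. pose proof (Cpow_neq0 t1 (k-1) H). field; nonzero_side. Qed.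
Lemma inv_t1_pow : Cpow (Cinv t1) k = Cinv q.
Proof. rewrite Cpow_inv, q_t1. reflexivity. Qed.
Lemma Texp_pow_pred : Cmul (Cpow Texp (k - 1)) Texp = Cmul q q.
Proof. rewrite <- Texp_pow_k. destruct k as [|k']; [lia|]. replace (S k' - 1)%nat with k' by lia. simpl. ring. Qed.

Lemma sh_neq0 : sh <> C0. Proof. apply Cexp_neq0. Qed.
Lemma t1_neq0 : t1 <> C0. Proof. apply Cexp_neq0. Qed.
Lemma qh_neq0 : qh <> C0. Proof. apply Cexp_neq0. Qed.
Lemma q_neq0 : q <> C0. Proof. apply Cexp_neq0. Qed.
End Params.

Lemma gfun_split : forall w a b l1 l2 A B, gden w a = Cmul l1 A -> gden w b = Cmul l2 B ->
  gfun w a b = Cmul (Cdiv l1 l2) (Cdiv A B).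
Proof. intros. unfold gfun. rewrite H, H0. apply Cdiv_split. Qed.

(* Identification of single g-factors of M_{N1,N2} with telescoped block products of
   M_{-e_1}.  Here Y = e^{y_l} is the exponential of a block coordinate and W = e^{x_b}
   that of the first coordinate of the block, related by W t1 = Y q. *)
Section Conv.
Variables (sh qh t1 q T : C).
Hypotheses (Hsh : sh <> C0) (Hqh : qh <> C0).
Hypothesis Ht1 : t1 = Cmul sh sh.
Hypothesis Hq : q = Cmul qh qh.
Hypothesis HT : T = Cmul t1 t1.

Lemma t1_nonzero : t1 <> C0. Proof. rewrite Ht1; apply Cmul_neq0; auto. Qed.
Lemma q_nonzero : q <> C0. Proof. rewrite Hq; apply Cmul_neq0; auto. Qed.

(* A free coordinate (e^{eps x_i} = Z) against a block. *)
Lemma free_vs_block_minus : forall W Z Y w Tk, W <> C0 -> Y <> C0 -> Cmul W t1 = Cmul Y q ->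
  Cexp w = Cdiv Z Y -> Tk = Cmul q q ->
  gfun w (Cmul qh sh) (Cmul (Cinv qh) sh)
  = Cmul (Cinv q) (Cdiv (Csub (Cmul (Cmul Z (Cinv W)) Tk) C1) (Csub (Cmul (Cmul Z (Cinv W)) C1) C1)).
Proof.
  intros W Z Y w Tk HW HY HWY Hw HTk.
  subst t1 q.
  assert (EY : Y = Cdiv (Cmul W (Cmul sh sh)) (Cmul qh qh)) by (rewrite HWY; field; auto).
  rewrite (gfun_split w _ _ (Cinv (Cmul qh sh)) (Cdiv qh sh)
       (Csub (Cmul (Cmul Z (Cinv W)) Tk) C1) (Csub (Cmul (Cmul Z (Cinv W)) C1) C1)).
  - f_equal. field; nonzero_side.
  - unfold gden. rewrite Hw, HTk, EY. field; nonzero_side.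
  - unfold gden. rewrite Hw, EY. field; nonzero_side.
Qed.

Lemma free_vs_block_plus : forall W Z Y w Tk, W <> C0 -> Y <> C0 -> Cmul W t1 = Cmul Y q ->
  Cexp w = Cmul Z Y -> Tk = Cmul q q ->
  gfun w (Cmul qh sh) (Cmul (Cinv qh) sh)
  = Cmul (Cinv q) (Cdiv (Csub (Cmul (Cmul (Cmul Z W) T) (Cinv C1)) C1)
                        (Csub (Cmul (Cmul (Cmul Z W) T) (Cinv Tk)) C1)).
Proof.
  intros W Z Y w Tk HW HY HWY Hw HTk.
  subst T t1 q.
  assert (EY : Y = Cdiv (Cmul W (Cmul sh sh)) (Cmul qh qh)) by (rewrite HWY; field; auto).
  rewrite (gfun_split w _ _ (Cinv (Cmul qh sh)) (Cdiv qh sh)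
       (Csub (Cmul (Cmul (Cmul Z W) (Cmul (Cmul sh sh) (Cmul sh sh))) (Cinv C1)) C1)
       (Csub (Cmul (Cmul (Cmul Z W) (Cmul (Cmul sh sh) (Cmul sh sh))) (Cinv Tk)) C1)).
  - f_equal. field; nonzero_side.
  - unfold gden. rewrite Hw, EY. rewrite Cinv_C1. field; nonzero_side.
  - unfold gden. rewrite Hw, HTk, EY. field; nonzero_side.
Qed.

(* The end of one block (Z t1 = Ye q) against another block (W t1 = Y' q). *)
Lemma end_vs_block_minus : forall W Z Ye Y' w Tk, W <> C0 -> Y' <> C0 -> Ye <> C0 ->
  Cmul W t1 = Cmul Y' q -> Cmul Z t1 = Cmul Ye q ->
  Cexp w = Cdiv Ye Y' -> Tk = Cmul q q ->
  gfun w q C1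
  = Cmul (Cinv q) (Cdiv (Csub (Cmul (Cmul Z (Cinv W)) Tk) C1) (Csub (Cmul (Cmul Z (Cinv W)) C1) C1)).
Proof.
  intros W Z Ye Y' w Tk HW HY HYe HWY HZY Hw HTk.
  pose proof t1_nonzero. pose proof q_nonzero.
  assert (EZ : Z = Cdiv (Cmul Ye q) t1) by (rewrite <- HZY; field; auto).
  assert (EW : W = Cdiv (Cmul Y' q) t1) by (rewrite <- HWY; field; auto).
  rewrite (gfun_split w _ _ (Cinv q) C1
       (Csub (Cmul (Cmul Z (Cinv W)) Tk) C1) (Csub (Cmul (Cmul Z (Cinv W)) C1) C1)).
  - f_equal. field; nonzero_side.
  - unfold gden. rewrite Hw, HTk, EZ, EW. field; nonzero_side.
  - unfold gden. rewrite Hw, EZ, EW. field; nonzero_side.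
Qed.

Lemma end_vs_block_plus : forall W Z Ye Y' w Tk, W <> C0 -> Y' <> C0 -> Ye <> C0 ->
  Cmul W t1 = Cmul Y' q -> Cmul Z t1 = Cmul Ye q ->
  Cexp w = Cmul Ye Y' -> Tk = Cmul q q ->
  gfun w q C1
  = Cmul (Cinv q) (Cdiv (Csub (Cmul (Cmul (Cmul Z W) T) (Cinv C1)) C1)
                        (Csub (Cmul (Cmul (Cmul Z W) T) (Cinv Tk)) C1)).
Proof.
  intros W Z Ye Y' w Tk HW HY HYe HWY HZY Hw HTk.
  pose proof t1_nonzero. pose proof q_nonzero.
  assert (EZ : Z = Cdiv (Cmul Ye q) t1) by (rewrite <- HZY; field; auto).
  assert (EW : W = Cdiv (Cmul Y' q) t1) by (rewrite <- HWY; field; auto).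
  rewrite (gfun_split w _ _ (Cinv q) C1
       (Csub (Cmul (Cmul (Cmul Z W) T) (Cinv C1)) C1)
       (Csub (Cmul (Cmul (Cmul Z W) T) (Cinv Tk)) C1)).
  - f_equal. field; nonzero_side.
  - unfold gden. rewrite Hw, EZ, EW, HT, Cinv_C1. field; nonzero_side.
  - unfold gden. rewrite Hw, HTk, EZ, EW, HT. field; nonzero_side.
Qed.

(* The end of a block against a free coordinate. *)
Lemma end_vs_free : forall Z Ye X z zy xj, Ye <> C0 -> X <> C0 ->
  Cexp z = Z -> Cexp zy = Ye -> Cexp xj = X -> Cmul Z t1 = Cmul Ye q ->
  Cmul (gfun (Csub z xj) t1 C1) (gfun (Cadd z xj) t1 C1)
  = Cmul (gfun (Csub zy xj) (Cmul qh sh) (Cmul qh (Cinv sh)))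
         (gfun (Cadd zy xj) (Cmul qh sh) (Cmul qh (Cinv sh))).
Proof.
  intros Z Ye X z zy xj HYe HX Hz Hzy Hx HZY.
  pose proof t1_nonzero. pose proof q_nonzero.
  assert (EZ : Z = Cdiv (Cmul Ye q) t1) by (rewrite <- HZY; field; auto).
  unfold gfun. f_equal.
  - symmetry; apply Cdiv_scale with (Cdiv sh qh); [apply Cmul_neq0; auto; apply Cinv_neq0; auto| |];
    unfold gden; rewrite !Cexp_sub, Hz, Hzy, Hx, EZ; subst t1 q; field; nonzero_side.
  - symmetry; apply Cdiv_scale with (Cdiv sh qh); [apply Cmul_neq0; auto; apply Cinv_neq0; auto| |];
    unfold gden; rewrite !Cexp_add, Hz, Hzy, Hx, EZ; subst t1 q; field; nonzero_side.
Qed.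
End Conv.

(* The x_i-dependent last factor of the Koornwinder coefficient (K_tail) and of B_l^eps
   (B_tail); at a block end they agree up to the own-block product P and the constant
   (1-q^{-2})/(1-s^{-2}). *)
Definition K_tail (q t0 tn u0 un ex e2x : C) : C :=
  Cdiv (Cmul (Cmul (Csub C1 (Cmul (Cmul (Cmul t0 u0) (Cinv q)) ex))
                  (Cadd C1 (Cmul (Cmul (Cmul t0 (Cinv u0)) (Cinv q)) ex)))
            (Cmul (Csub C1 (Cmul (Cmul tn un) ex))
                  (Cadd C1 (Cmul (Cmul tn (Cinv un)) ex))))
      (Cmul (Csub C1 (Cmul (Cmul (Cinv q) (Cinv q)) e2x)) (Csub C1 e2x)).

Definition B_tail (q s a b c d ey e2y : C) : C :=
  Cdiv (Cprod [a; b; c; d] (fun p => Csub C1 (Cmul (Cmul (Cmul p q) (Cinv s)) ey)))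
       (Cmul (Csub C1 (Cmul (Cinv (Cmul s s)) e2y)) (Csub C1 e2y)).

(* At a surviving end (Z t1 = Ye q), given the own-block identity for P. *)
Lemma tail_identity : forall t1 q Z Ye P t0 tn u0 un,
  t1 <> C0 -> q <> C0 -> Ye <> C0 -> u0 <> C0 -> un <> C0 ->
  Cmul Z t1 = Cmul Ye q ->
  Cmul (Cmul P (Csub (Cmul t1 t1) C1)) (Csub (Cmul Ye Ye) C1)
    = Cmul (Cmul (Cdiv t1 q) (Cdiv t1 q)) (Cmul (Csub (Cmul q q) C1) (Csub (Cmul Z Z) C1)) ->
  Csub (Cmul t1 t1) C1 <> C0 -> Csub C1 (Cmul Ye Ye) <> C0 -> Csub C1 (Cmul Z Z) <> C0 ->
  Csub C1 (Cmul (Cinv (Cmul t1 t1)) (Cmul Ye Ye)) <> C0 ->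
  Cmul P (K_tail q t0 tn u0 un Z (Cmul Z Z))
  = Cmul (Cdiv (Csub C1 (Cinv (Cmul q q))) (Csub C1 (Cinv (Cmul t1 t1))))
         (B_tail q t1 (Cmul (Cmul t0 u0) (Cinv q)) (Copp (Cmul (Cmul t0 (Cinv u0)) (Cinv q)))
              (Cmul tn un) (Copp (Cmul tn (Cinv un))) Ye (Cmul Ye Ye)).
Proof.
  intros t1 q Z Ye P t0 tn u0 un Ht1 Hq HYe Hu0 Hun HZY HP H1 H2 H3 H4.
  assert (EZ : Z = Cdiv (Cmul Ye q) t1) by (rewrite <- HZY; field; auto).
  assert (H2' : Csub (Cmul Ye Ye) C1 <> C0).
  { intro E. apply H2. replace (Csub C1 (Cmul Ye Ye)) with (Copp (Csub (Cmul Ye Ye) C1)) by ring.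
    rewrite E; ring. }
  assert (EP : P = Cdiv (Cmul (Cmul (Cdiv t1 q) (Cdiv t1 q)) (Cmul (Csub (Cmul q q) C1) (Csub (Cmul Z Z) C1)))
                   (Cmul (Csub (Cmul t1 t1) C1) (Csub (Cmul Ye Ye) C1))).
  { rewrite <- HP. field. auto. }
  assert (H3' : Csub C1 (Cmul (Cmul (Cinv q) (Cinv q)) (Cmul Z Z)) <> C0).
  { replace (Csub C1 (Cmul (Cmul (Cinv q) (Cinv q)) (Cmul Z Z))) with (Csub C1 (Cmul (Cinv (Cmul t1 t1)) (Cmul Ye Ye))); auto.
    rewrite EZ. field. auto. }
  unfold K_tail, B_tail. simpl Cprod.
  rewrite EP.
  assert (H4' : Csub (Cmul t1 t1) (Cmul Ye Ye) <> C0).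
  { intro E. apply H4. replace (Csub C1 (Cmul (Cinv (Cmul t1 t1)) (Cmul Ye Ye)))
      with (Cmul (Cinv (Cmul t1 t1)) (Csub (Cmul t1 t1) (Cmul Ye Ye))) by (field; auto).
    rewrite E; ring. }
  assert (H3'' : Csub (Cmul t1 t1) (Cmul (Cmul Ye q) (Cmul Ye q)) <> C0).
  { intro E. apply H3. replace (Csub C1 (Cmul Z Z))
      with (Cmul (Cinv (Cmul t1 t1)) (Csub (Cmul t1 t1) (Cmul (Cmul Ye q) (Cmul Ye q)))) by (rewrite EZ; field; auto).
    rewrite E; ring. }
  rewrite EZ in *. field. repeat split; auto.
Qed.

(* The restriction of M_{-e_1} written as a sum of difference terms K (F(shifted) - F)
   plus kappa_t F; this only uses the shape (sum of K (tau - 1)) + kappa_t of M_{-e_1}. *)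
Lemma restr_act_Koornwinder : forall n N1 k m hbar t0 s tn u0 un F x,
  restr_act N1 k m hbar (Koornwinder_op n hbar t0 s tn u0 un) F x
  = Cadd (Csum (rng n) (fun i => Csum signs (fun e =>
            Cmul (K_coef n hbar t0 s tn u0 un i e x)
                 (Csub (F (chartD0 N1 k m (fun j => Csub (x j) (Cmul hbar (projS0 N1 k m (unitvec i e) j)))))
                       (F (chartD0 N1 k m x))))))
         (Cmul (kappa_t n t0 s tn) (F (chartD0 N1 k m x))).
Proof.
  intros.
  unfold restr_act, Koornwinder_op.
  rewrite Csum_app, Csum_flat_map.
  rewrite (Csum_ext (rng n) _ (fun i => Csum signs (fun e =>
      Cmul (K_coef n hbar t0 s tn u0 un i e x)
           (F (chartD0 N1 k m (fun j => Csub (x j) (Cmul hbar (projS0 N1 k m (unitvec i e) j)))))))).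
  2:{ intros i _. rewrite Csum_map. reflexivity. }
  rewrite Csum_cons. cbv beta iota delta [fst snd]. rewrite chart_zero.
  rewrite (Csum2_split_const (rng n) signs (fun i e => K_coef n hbar t0 s tn u0 un i e x)
     (fun i e => F (chartD0 N1 k m (fun j => Csub (x j) (Cmul hbar (projS0 N1 k m (unitvec i e) j)))))
     (F (chartD0 N1 k m x))).
  simpl (Csum [] _). ring.
Qed.

Definition gpair (t : C) (z v : C) : C := Cmul (gfun (Csub z v) t C1) (gfun (Cadd z v) t C1).

Section OnD0.
Variables (n k m : nat) (eta hbar : C) (x : Vec).
Hypothesis Hk : (2 <= k)%nat.
Hypothesis Hn : (m * k <= n)%nat.
Hypothesis Hh : hbar = Cmul (Cnat k) eta.
Local Notation N1 := (n - m * k)%nat.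
Hypothesis HD : inD0 N1 k m eta x.

Local Notation T := (Texp eta).
Local Notation tt := (t1 eta).
Local Notation qq := (q hbar).
Local Notation Bk l := (N1 + k * (l - 1))%nat.
Local Notation xs := (fst (chartD0 N1 k m x)).
Local Notation ys := (snd (chartD0 N1 k m x)).
Definition blk_exp (l : nat) := Cexp (x (Bk l + 1)%nat).
Definition avg_exp (l : nat) := Cexp (ys l).

Lemma blk_exp_neq0 : forall l, blk_exp l <> C0. Proof. intros; apply Cexp_neq0. Qed.
Lemma avg_exp_neq0 : forall l, avg_exp l <> C0. Proof. intros; apply Cexp_neq0. Qed.

Lemma blk_exp_progression : forall l r, (1 <= l <= m)%nat -> (r < k)%nat ->
  Cexp (x (Bk l + 1 + r)%nat) = Cmul (blk_exp l) (Cinv (Cpow T r)).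
Proof.
  intros l r Hl Hr. rewrite (D0_block_progression N1 k m eta x HD l r Hl Hr).
  rewrite Cexp_sub, Cexp_nat. reflexivity.
Qed.

(* e^{x_b} t1 = e^{y_l} q, since y_l = x_b - (k-1)/2 eta and q = t1^k. *)
Lemma blk_exp_avg : forall l, (1 <= l <= m)%nat -> Cmul (blk_exp l) tt = Cmul (avg_exp l) qq.
Proof.
  intros l Hl. unfold avg_exp. rewrite (chart_block_average N1 k m eta x ltac:(lia) HD l Hl).
  rewrite Cexp_sub. fold (blk_exp l).
  assert (E : Cexp (Cmul (Cdiv (Cnat (k - 1)) (Cnat 2)) eta) = Cpow tt (k - 1)).
  { unfold t1. rewrite <- Cexp_nat. f_equal. pose proof Cnat2_neq0. field. auto. }
  rewrite E, <- (t1_pow_pred k eta hbar) by (auto || lia).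
  pose proof (Cpow_neq0 tt (k-1) (t1_neq0 eta)). field. auto.
Qed.

Lemma avg_exp_eq : forall l, (1 <= l <= m)%nat -> avg_exp l = Cdiv (Cmul (blk_exp l) tt) qq.
Proof.
  intros l Hl. rewrite (blk_exp_avg l Hl). pose proof (q_neq0 hbar). field. auto.
Qed.

Lemma Texp_pow_pred_ratio : Cpow T (k - 1) = Cdiv (Cmul qq qq) (Cmul tt tt).
Proof.
  pose proof (t1_neq0 eta).
  rewrite <- (Texp_pow_pred k eta hbar) by (auto || lia). rewrite (Texp_t1 eta). field. auto.
Qed.

Lemma chart_free_coord : forall j, (1 <= j <= N1)%nat -> xs j = x j.
Proof.
  intros j Hj. unfold chartD0; cbv beta iota delta [fst].
  destruct (Nat.leb_spec 1 j), (Nat.leb_spec j N1); simpl; reflexivity || lia.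
Qed.

Lemma in_rng_blk : forall l r, (1 <= l <= m)%nat -> (r < k)%nat -> In (Bk l + 1 + r)%nat (rng n).
Proof.
  intros l r Hl Hr. unfold rng. apply in_seq. pose proof (block_end_le N1 k m l Hl). nia.
Qed.

Lemma block_range_telescope : forall l z a c, (1 <= l <= m)%nat -> (a + c <= k)%nat ->
  (forall r, (a <= r < a + c)%nat -> den_minus T (Cexp z) (blk_exp l) r <> C0) ->
  (forall r, (a < r <= a + c)%nat -> den_plus T (Cexp z) (blk_exp l) r <> C0) ->
  Cmul (Cmul (Cprod (seq (Bk l + 1 + a) c) (fun j => gpair tt z (x j)))
             (den_minus T (Cexp z) (blk_exp l) a)) (den_plus T (Cexp z) (blk_exp l) (a + c))
  = Cmul (Cmul (Cpow (Cinv tt) c) (den_minus T (Cexp z) (blk_exp l) (a + c)))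
         (Cmul (Cpow (Cinv tt) c) (den_plus T (Cexp z) (blk_exp l) a)).
Proof.
  intros l z a c Hl Hac Ha Hb. rewrite Cprod_seq_shift.
  apply (block_telescope tt T (Cexp z) (blk_exp l) (fun r => x (Bk l + 1 + r)%nat) z
           (t1_neq0 eta) (Texp_t1 eta) (blk_exp_neq0 l) eq_refl a c); auto.
  intros r Hr. apply blk_exp_progression; lia.
Qed.

Lemma block_gpair_prod : forall l z, (1 <= l <= m)%nat ->
  (forall r, (r < k)%nat -> den_minus T (Cexp z) (blk_exp l) r <> C0) ->
  (forall r, (0 < r <= k)%nat -> den_plus T (Cexp z) (blk_exp l) r <> C0) ->
  Cprod (seq (Bk l + 1) k) (fun j => gpair tt z (x j))
  = Cmul (Cmul (Cinv qq) (Cdiv (den_minus T (Cexp z) (blk_exp l) k) (den_minus T (Cexp z) (blk_exp l) 0)))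
         (Cmul (Cinv qq) (Cdiv (den_plus T (Cexp z) (blk_exp l) 0) (den_plus T (Cexp z) (blk_exp l) k))).
Proof.
  intros l z Hl Ha Hb.
  pose proof (block_range_telescope l z 0 k Hl ltac:(lia)
                (fun r Hr => Ha r ltac:(lia)) (fun r Hr => Hb r ltac:(lia))) as H.
  rewrite Nat.add_0_r, Nat.add_0_l, (inv_t1_pow k eta hbar Hh) in H.
  assert (H0 := Ha 0%nat ltac:(lia)). assert (Hkk := Hb k ltac:(lia)).
  set (P := Cprod _ _) in *.
  replace P with (Cdiv (Cmul (Cmul P (den_minus T (Cexp z) (blk_exp l) 0)) (den_plus T (Cexp z) (blk_exp l) k))
                       (Cmul (den_minus T (Cexp z) (blk_exp l) 0) (den_plus T (Cexp z) (blk_exp l) k)))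
    by (field; auto).
  rewrite H. pose proof (q_neq0 hbar). field. auto.
Qed.

Hypothesis HK : K_good n hbar tt x.

Lemma den_minus_nonzero : forall i e l r, In i (rng n) -> (1 <= l <= m)%nat -> (r < k)%nat ->
  (Bk l + 1 + r)%nat <> i ->
  den_minus T (Cexp (Cmul (sgnC e) (x i))) (blk_exp l) r <> C0.
Proof.
  intros i e l r Hi Hl Hr Hne.
  destruct HK as [_ HK2]. destruct (HK2 i e Hi) as [HK3 _].
  destruct (HK3 _ (in_rng_blk l r Hl Hr) Hne) as [HA _].
  rewrite <- (gden_minus tt T (Cexp (Cmul (sgnC e) (x i))) (blk_exp l) (fun r => x (Bk l + 1 + r)%nat)
               (Cmul (sgnC e) (x i)) (t1_neq0 eta) (Texp_t1 eta) (blk_exp_neq0 l) eq_refl r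
               (blk_exp_progression l r Hl Hr)).
  exact HA.
Qed.

Lemma den_plus_nonzero : forall i e l r, In i (rng n) -> (1 <= l <= m)%nat -> (r < k)%nat ->
  (Bk l + 1 + r)%nat <> i ->
  den_plus T (Cexp (Cmul (sgnC e) (x i))) (blk_exp l) (S r) <> C0.
Proof.
  intros i e l r Hi Hl Hr Hne.
  destruct HK as [_ HK2]. destruct (HK2 i e Hi) as [HK3 _].
  destruct (HK3 _ (in_rng_blk l r Hl Hr) Hne) as [_ HB].
  rewrite <- (gden_plus tt T (Cexp (Cmul (sgnC e) (x i))) (blk_exp l) (fun r => x (Bk l + 1 + r)%nat)
               (Cmul (sgnC e) (x i)) (t1_neq0 eta) (Texp_t1 eta) eq_refl r
               (blk_exp_progression l r Hl Hr)).
  exact HB.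
Qed.

Lemma t1_sq_ne1 : Csub (Cmul tt tt) C1 <> C0.
Proof.
  destruct HK as [HK1 _]. intro E. apply HK1.
  replace (Csub tt (Cinv tt)) with (Cmul (Cinv tt) (Csub (Cmul tt tt) C1))
    by (pose proof (t1_neq0 eta); field; auto).
  rewrite E; ring.
Qed.

Lemma block_gpair_prod_outside : forall i e l, In i (rng n) -> (1 <= l <= m)%nat ->
  (forall r, (r < k)%nat -> (Bk l + 1 + r)%nat <> i) ->
  Cprod (seq (Bk l + 1) k) (fun j => gpair tt (Cmul (sgnC e) (x i)) (x j))
  = Cmul (Cmul (Cinv qq) (Cdiv (den_minus T (Cexp (Cmul (sgnC e) (x i))) (blk_exp l) k)
                               (den_minus T (Cexp (Cmul (sgnC e) (x i))) (blk_exp l) 0)))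
         (Cmul (Cinv qq) (Cdiv (den_plus T (Cexp (Cmul (sgnC e) (x i))) (blk_exp l) 0)
                               (den_plus T (Cexp (Cmul (sgnC e) (x i))) (blk_exp l) k))).
Proof.
  intros i e l Hi Hl Hout. apply block_gpair_prod; auto.
  - intros r Hr. apply den_minus_nonzero; auto.
  - intros r Hr. replace r with (S (r - 1)) by lia. apply den_plus_nonzero; auto; [lia | apply Hout; lia].
Qed.

Lemma block_prod_free_index : forall i e l, (1 <= i <= N1)%nat -> (1 <= l <= m)%nat ->
  Cprod (seq (Bk l + 1) k) (fun j => if Nat.eqb j i then C1 else gpair tt (Cmul (sgnC e) (x i)) (x j))
  = Cmul (gfun (Csub (Cmul (sgnC e) (x i)) (ys l)) (Cmul (qh hbar) (sh eta)) (Cmul (Cinv (qh hbar)) (sh eta)))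
         (gfun (Cadd (Cmul (sgnC e) (x i)) (ys l)) (Cmul (qh hbar) (sh eta)) (Cmul (Cinv (qh hbar)) (sh eta))).
Proof.
  intros i e l Hi Hl.
  assert (Hin : In i (rng n)) by (unfold rng; apply in_seq; lia).
  rewrite (Cprod_ext _ _ (fun j => gpair tt (Cmul (sgnC e) (x i)) (x j))).
  2:{ intros j Hj. apply in_seq in Hj. destruct (Nat.eqb_spec j i); [nia|reflexivity]. }
  rewrite (block_gpair_prod_outside i e l Hin Hl) by nia.
  f_equal.
  - symmetry. apply (free_vs_block_minus (sh eta) (qh hbar) tt qq T (sh_neq0 eta) (qh_neq0 hbar)
       (t1_sh eta) (q_qh hbar) (Texp_t1 eta) (blk_exp l) (Cexp (Cmul (sgnC e) (x i))) (avg_exp l));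
      auto using blk_exp_neq0, avg_exp_neq0.
    + apply blk_exp_avg; lia.
    + rewrite Cexp_sub. reflexivity.
    + apply Texp_pow_k; auto; lia.
  - symmetry. apply (free_vs_block_plus (sh eta) (qh hbar) tt qq T (sh_neq0 eta) (qh_neq0 hbar)
       (t1_sh eta) (q_qh hbar) (Texp_t1 eta) (blk_exp l) (Cexp (Cmul (sgnC e) (x i))) (avg_exp l));
      auto using blk_exp_neq0, avg_exp_neq0.
    + apply blk_exp_avg; lia.
    + rewrite Cexp_add. reflexivity.
    + apply Texp_pow_k; auto; lia.
Qed.

(* The two indices of block l whose coefficient survives on D_0: the first one for
   eps = +1 and the last one for eps = -1. *)
Definition end_offset (e : bool) : nat := if e then 0%nat else (k - 1)%nat.
Definition block_end (l : nat) (e : bool) : nat := (Bk l + 1 + end_offset e)%nat.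

Lemma block_end_in_rng : forall l e, (1 <= l <= m)%nat -> In (block_end l e) (rng n).
Proof. intros l e Hl. apply in_rng_blk; auto. destruct e; simpl; lia. Qed.

Lemma block_end_exp : forall l e, (1 <= l <= m)%nat ->
  Cmul (Cexp (Cmul (sgnC e) (x (block_end l e)))) tt = Cmul (Cexp (Cmul (sgnC e) (ys l))) qq.
Proof.
  intros l e Hl. unfold block_end, end_offset. destruct e.
  - rewrite !Cexp_sgn_true, Nat.add_0_r. exact (blk_exp_avg l Hl).
  - rewrite !Cexp_sgn_false, blk_exp_progression by lia. fold (avg_exp l).
    rewrite Texp_pow_pred_ratio, avg_exp_eq by auto.
    pose proof (blk_exp_neq0 l). pose proof (t1_neq0 eta). pose proof (q_neq0 hbar).
    field. auto.
Qed.

Definition own_prod (l : nat) (e : bool) : C :=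
  Cprod (seq (Bk l + 1) k) (fun j => if Nat.eqb j (block_end l e) then C1
                                    else gpair tt (Cmul (sgnC e) (x (block_end l e))) (x j)).

Lemma own_block_first : forall l, (1 <= l <= m)%nat ->
  Cmul (Cmul (own_prod l true) (Csub (Cmul tt tt) C1))
       (Csub (Cmul (Cexp (Cmul (sgnC true) (ys l))) (Cexp (Cmul (sgnC true) (ys l)))) C1)
  = Cmul (Cmul (Cdiv tt qq) (Cdiv tt qq))
         (Cmul (Csub (Cmul qq qq) C1)
               (Csub (Cmul (Cexp (Cmul (sgnC true) (x (block_end l true))))
                           (Cexp (Cmul (sgnC true) (x (block_end l true))))) C1)).
Proof.
  intros l Hl. unfold own_prod.
  pose proof (block_end_in_rng l true Hl) as Hin.
  unfold block_end, end_offset in *. rewrite Nat.add_0_r in *.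
  set (i := (Bk l + 1)%nat) in *.
  set (z := Cmul (sgnC true) (x i)).
  assert (HZW : Cexp z = blk_exp l) by (unfold z; rewrite Cexp_sgn_true; reflexivity).
  replace k with (S (k - 1)) at 1 by lia.
  rewrite <- cons_seq, Cprod_cons, Nat.eqb_refl.
  rewrite (Cprod_ext _ _ (fun j => gpair tt z (x j))).
  2:{ intros j Hj. apply in_seq in Hj. destruct (Nat.eqb_spec j i); [unfold i in *; lia|reflexivity]. }
  replace (S i) with (Bk l + 1 + 1)%nat by (unfold i; lia).
  pose proof (block_range_telescope l z 1 (k - 1) Hl ltac:(lia)) as H.
  replace (1 + (k - 1))%nat with k in H by lia.
  specialize (H (fun r Hr => den_minus_nonzero i true l r Hin Hl ltac:(lia) ltac:(unfold i; lia))).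
  specialize (H (fun r Hr => ltac:(replace r with (S (r - 1)) by lia;
                                   apply den_plus_nonzero; auto; unfold i; lia))).
  rewrite (inv_t1_pow_pred k eta hbar), HZW in H by (auto || lia).
  set (P := Cprod _ _) in *.
  unfold den_minus, den_plus in H. simpl Cpow in H.
  rewrite (Texp_pow_k k eta hbar Hh), (Texp_t1 eta) in H.
  rewrite HZW, Cexp_sgn_true. fold (avg_exp l). rewrite (avg_exp_eq l Hl).
  pose proof (blk_exp_neq0 l). pose proof (t1_neq0 eta). pose proof (q_neq0 hbar).
  replace (Csub (Cmul (Cdiv (Cmul (blk_exp l) tt) qq) (Cdiv (Cmul (blk_exp l) tt) qq)) C1)
    with (Csub (Cmul (Cmul (Cmul (blk_exp l) (blk_exp l)) (Cmul tt tt)) (Cinv (Cmul qq qq))) C1) by (field; auto).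
  replace (Csub (Cmul tt tt) C1) with (Csub (Cmul (Cmul (blk_exp l) (Cinv (blk_exp l))) (Cmul (Cmul tt tt) C1)) C1)
    by (field; auto).
  replace (Cmul C1 P) with P by ring. rewrite H. field. auto.
Qed.

Lemma own_block_last : forall l, (1 <= l <= m)%nat ->
  Cmul (Cmul (own_prod l false) (Csub (Cmul tt tt) C1))
       (Csub (Cmul (Cexp (Cmul (sgnC false) (ys l))) (Cexp (Cmul (sgnC false) (ys l)))) C1)
  = Cmul (Cmul (Cdiv tt qq) (Cdiv tt qq))
         (Cmul (Csub (Cmul qq qq) C1)
               (Csub (Cmul (Cexp (Cmul (sgnC false) (x (block_end l false))))
                           (Cexp (Cmul (sgnC false) (x (block_end l false))))) C1)).
Proof.
  intros l Hl. unfold own_prod.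
  pose proof (block_end_in_rng l false Hl) as Hin.
  unfold block_end, end_offset in *.
  set (i := (Bk l + 1 + (k - 1))%nat) in *.
  set (z := Cmul (sgnC false) (x i)).
  assert (Hseq : seq (Bk l + 1) k = seq (Bk l + 1 + 0) (k - 1) ++ [i]).
  { unfold i. rewrite Nat.add_0_r, <- seq_S. f_equal. lia. }
  rewrite Hseq, Cprod_app. simpl (Cprod [i] _). rewrite Nat.eqb_refl.
  rewrite (Cprod_ext _ _ (fun j => gpair tt z (x j))).
  2:{ intros j Hj. apply in_seq in Hj. destruct (Nat.eqb_spec j i); [unfold i in *; lia|reflexivity]. }
  pose proof (block_range_telescope l z 0 (k - 1) Hl ltac:(lia)) as H.
  specialize (H (fun r Hr => den_minus_nonzero i false l r Hin Hl ltac:(lia) ltac:(unfold i; lia))).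
  specialize (H (fun r Hr => ltac:(replace r with (S (r - 1)) by lia;
                                   apply den_plus_nonzero; auto; unfold i; lia))).
  rewrite (inv_t1_pow_pred k eta hbar) in H by (auto || lia).
  set (P := Cprod _ _) in *.
  unfold den_minus, den_plus in H. simpl Cpow in H.
  assert (HZ : Cexp z = Cinv (Cmul (blk_exp l) (Cinv (Cpow T (k - 1))))).
  { unfold z, i. rewrite Cexp_sgn_false, blk_exp_progression by lia. reflexivity. }
  rewrite Cexp_sgn_false. fold (avg_exp l). rewrite (avg_exp_eq l Hl).
  fold z. rewrite HZ in *. rewrite Texp_pow_pred_ratio in *. rewrite (Texp_t1 eta) in H.
  pose proof (blk_exp_neq0 l). pose proof (t1_neq0 eta). pose proof (q_neq0 hbar).
  set (W := blk_exp l) in *. set (Q2 := Cdiv (Cmul qq qq) (Cmul tt tt)) in *.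
  assert (HQ2 : Q2 <> C0)
    by (unfold Q2; apply Cmul_neq0; [apply Cmul_neq0; auto| apply Cinv_neq0; apply Cmul_neq0; auto]).
  replace (Cmul (Cmul (Cmul P (Cmul C1 C1)) (Csub (Cmul tt tt) C1))
               (Csub (Cmul (Cinv (Cdiv (Cmul W tt) qq)) (Cinv (Cdiv (Cmul W tt) qq))) C1))
    with (Cmul (Cmul P (Csub (Cmul (Cmul (Cinv (Cmul W (Cinv Q2))) (Cinv W)) C1) C1))
               (Csub (Cmul (Cmul (Cmul (Cinv (Cmul W (Cinv Q2))) W) (Cmul tt tt)) (Cinv Q2)) C1)).
  2:{ unfold Q2; field; repeat split; auto; exact C1_neq_C0. }
  rewrite H. unfold Q2. field. repeat split; auto; exact C1_neq_C0.
Qed.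

Lemma own_block_end : forall l e, (1 <= l <= m)%nat ->
  Cmul (Cmul (own_prod l e) (Csub (Cmul tt tt) C1))
       (Csub (Cmul (Cexp (Cmul (sgnC e) (ys l))) (Cexp (Cmul (sgnC e) (ys l)))) C1)
  = Cmul (Cmul (Cdiv tt qq) (Cdiv tt qq))
         (Cmul (Csub (Cmul qq qq) C1)
               (Csub (Cmul (Cexp (Cmul (sgnC e) (x (block_end l e))))
                           (Cexp (Cmul (sgnC e) (x (block_end l e))))) C1)).
Proof. intros l [] Hl; [apply own_block_first | apply own_block_last]; auto. Qed.

Lemma block_prod_other_block : forall l e l', (1 <= l <= m)%nat -> (1 <= l' <= m)%nat -> l' <> l ->
  Cprod (seq (Bk l' + 1) k) (fun j => if Nat.eqb j (block_end l e) then C1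
                                      else gpair tt (Cmul (sgnC e) (x (block_end l e))) (x j))
  = Cmul (gfun (Csub (Cmul (sgnC e) (ys l)) (ys l')) qq C1)
         (gfun (Cadd (Cmul (sgnC e) (ys l)) (ys l')) qq C1).
Proof.
  intros l e l' Hl Hl' Hne.
  pose proof (block_end_in_rng l e Hl) as Hin.
  assert (Hout : forall r, (r < k)%nat -> (Bk l' + 1 + r)%nat <> block_end l e).
  { intros r Hr E. apply Hne. unfold block_end in E.
    apply (block_index_inj N1 k l' l r (end_offset e)); try lia. unfold end_offset; destruct e; lia. }
  rewrite (Cprod_ext _ _ (fun j => gpair tt (Cmul (sgnC e) (x (block_end l e))) (x j))).
  2:{ intros j Hj. apply in_seq in Hj. destruct (Nat.eqb_spec j (block_end l e)); [|reflexivity].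
      exfalso. apply (Hout (j - (Bk l' + 1))%nat); lia. }
  rewrite (block_gpair_prod_outside _ e l' Hin ltac:(lia) Hout).
  pose proof (block_end_exp l e Hl) as HZY.
  f_equal.
  - symmetry. apply (end_vs_block_minus (sh eta) (qh hbar) tt qq (sh_neq0 eta) (qh_neq0 hbar)
       (t1_sh eta) (q_qh hbar) (blk_exp l') _ (Cexp (Cmul (sgnC e) (ys l))) (avg_exp l'));
      auto using blk_exp_neq0, avg_exp_neq0, Cexp_neq0.
    + apply blk_exp_avg; lia.
    + rewrite Cexp_sub. reflexivity.
    + apply Texp_pow_k; auto.
  - symmetry. apply (end_vs_block_plus (sh eta) (qh hbar) tt qq T (sh_neq0 eta) (qh_neq0 hbar)
       (t1_sh eta) (q_qh hbar) (Texp_t1 eta) (blk_exp l') _ (Cexp (Cmul (sgnC e) (ys l))) (avg_exp l'));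
      auto using blk_exp_neq0, avg_exp_neq0, Cexp_neq0.
    + apply blk_exp_avg; lia.
    + rewrite Cexp_add. reflexivity.
    + apply Texp_pow_k; auto.
Qed.

Lemma blocks_prod_block_end : forall l e, (1 <= l <= m)%nat ->
  Cprod (rng m) (fun l' => Cprod (seq (Bk l' + 1) k)
           (fun j => if Nat.eqb j (block_end l e) then C1
                     else gpair tt (Cmul (sgnC e) (x (block_end l e))) (x j)))
  = Cmul (own_prod l e)
         (Cprod (rng m) (fun l' => if Nat.eqb l' l then C1 else
            Cmul (gfun (Csub (Cmul (sgnC e) (ys l)) (ys l')) qq C1)
                 (gfun (Cadd (Cmul (sgnC e) (ys l)) (ys l')) qq C1))).
Proof.
  intros l e Hl. unfold own_prod.
  rewrite <- Cprod_pull; [| unfold rng; apply seq_NoDup | unfold rng; apply in_seq; lia].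
  apply Cprod_ext. intros l' Hl'. unfold rng in Hl'; apply in_seq in Hl'.
  destruct (Nat.eqb_spec l' l) as [->|Hne]; [reflexivity|].
  apply block_prod_other_block; auto; lia.
Qed.

Lemma free_prod_block_end : forall l e, (1 <= l <= m)%nat ->
  Cprod (rng N1) (fun j => if Nat.eqb j (block_end l e) then C1
                           else gpair tt (Cmul (sgnC e) (x (block_end l e))) (x j))
  = Cprod (rng N1) (fun j =>
      Cmul (gfun (Csub (Cmul (sgnC e) (ys l)) (xs j)) (Cmul (qh hbar) (sh eta)) (Cmul (qh hbar) (Cinv (sh eta))))
           (gfun (Cadd (Cmul (sgnC e) (ys l)) (xs j)) (Cmul (qh hbar) (sh eta)) (Cmul (qh hbar) (Cinv (sh eta))))).
Proof.
  intros l e Hl. apply Cprod_ext. intros j Hj. unfold rng in Hj; apply in_seq in Hj.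
  destruct (Nat.eqb_spec j (block_end l e)); [unfold block_end in *; nia|].
  rewrite (chart_free_coord j) by lia.
  apply (end_vs_free (sh eta) (qh hbar) tt qq T (sh_neq0 eta) (qh_neq0 hbar) (t1_sh eta) (q_qh hbar)
           (Texp_t1 eta) (Cexp (Cmul (sgnC e) (x (block_end l e)))) (Cexp (Cmul (sgnC e) (ys l)))
           (Cexp (x j))); auto using Cexp_neq0, block_end_exp.
Qed.

Variables (t0 tn u0 un : C).
Hypotheses (Hu0 : u0 <> C0) (Hun : un <> C0).
Local Notation aa := (Cmul (Cmul t0 u0) (Cinv qq)).
Local Notation bb := (Copp (Cmul (Cmul t0 (Cinv u0)) (Cinv qq))).
Local Notation cc := (Cmul tn un).
Local Notation dd := (Copp (Cmul tn (Cinv un))).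
Local Notation ratio := (Cdiv (Csub C1 (Cinv (Cmul qq qq))) (Csub C1 (Cinv (Cmul tt tt)))).

Lemma K_coef_eq : forall i e, K_coef n hbar t0 tt tn u0 un i e x
  = Cmul (Cinv (Cmul t0 tn))
     (Cmul (Cprod (rng n) (fun j => if Nat.eqb j i then C1 else gpair tt (Cmul (sgnC e) (x i)) (x j)))
           (K_tail qq t0 tn u0 un (Cexp (Cmul (sgnC e) (x i)))
                (Cmul (Cexp (Cmul (sgnC e) (x i))) (Cexp (Cmul (sgnC e) (x i)))))).
Proof. intros. unfold K_coef, K_tail, gpair. cbv zeta. rewrite Cexp_2. reflexivity. Qed.

Lemma K_coef_free : forall i e, (1 <= i <= N1)%nat ->
  K_coef n hbar t0 tt tn u0 un i e x
  = Cmul (Cinv (Cmul t0 tn)) (A_coef N1 m hbar eta aa bb cc dd i e xs ys).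
Proof.
  intros i e Hi.
  rewrite K_coef_eq. unfold A_coef. cbv zeta. rewrite Cexp_2.
  rewrite (chart_free_coord i Hi).
  rewrite (rng_split n k m Hn), Cprod_app, Cprod_flat_map.
  match goal with |- Cmul ?I (Cmul (Cmul ?P1 ?P2) ?BK) = Cmul ?I' (Cmul ?A1 (Cmul ?A2 ?BA)) =>
    transitivity (Cmul I (Cmul P1 (Cmul P2 BK))); [ring|]; f_equal; f_equal; [|f_equal] end.
  - apply Cprod_ext. intros j Hj. unfold rng in Hj; apply in_seq in Hj.
    rewrite (chart_free_coord j) by lia. reflexivity.
  - apply Cprod_ext. intros l Hl. unfold rng in Hl; apply in_seq in Hl.
    apply block_prod_free_index; lia.
  - unfold K_tail. simpl Cprod. change (Cexp (Cdiv hbar (Cnat 2))) with qq.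
    rewrite (Cinv_mul qq qq). unfold Cdiv. f_equal; ring.
Qed.

Hypothesis HM : M_good N1 m hbar eta (chartD0 N1 k m x).

Lemma K_coef_block_end : forall l e, (1 <= l <= m)%nat ->
  K_coef n hbar t0 tt tn u0 un (block_end l e) e x
  = Cmul (Cinv (Cmul t0 tn)) (Cmul ratio (B_coef N1 m hbar eta aa bb cc dd l e xs ys)).
Proof.
  intros l e Hl.
  rewrite K_coef_eq. unfold B_coef. cbv zeta. rewrite Cexp_2.
  rewrite (rng_split n k m Hn), Cprod_app, Cprod_flat_map.
  rewrite blocks_prod_block_end, free_prod_block_end by auto.
  set (Z := Cexp (Cmul (sgnC e) (x (block_end l e)))).
  set (Ye := Cexp (Cmul (sgnC e) (ys l))).
  assert (HZZ : Csub C1 (Cmul Z Z) <> C0).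
  { destruct HK as [_ HK2]. destruct (HK2 _ e (block_end_in_rng l e Hl)) as [_ [_ HZ2]].
    rewrite Cexp_2 in HZ2. exact HZ2. }
  assert (HMl : In l (rng m)) by (unfold rng; apply in_seq; lia).
  destruct HM as [_ [_ HM3]]. destruct (HM3 l e HMl) as [_ [_ [HM4 HM5]]].
  cbv zeta in HM4, HM5. rewrite Cexp_2 in HM4, HM5. fold Ye in HM4, HM5.
  pose proof (tail_identity tt qq Z Ye (own_prod l e) t0 tn u0 un (t1_neq0 eta) (q_neq0 hbar)
      (Cexp_neq0 _) Hu0 Hun (block_end_exp l e Hl) (own_block_end l e Hl) t1_sq_ne1 HM5 HZZ HM4) as E.
  unfold B_tail in E.
  match goal with |- Cmul ?I (Cmul (Cmul ?P1 (Cmul ?OWN ?P2)) ?BK) = Cmul ?I' (Cmul ?R (Cmul ?A1 (Cmul ?A2 ?BB))) =>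
    transitivity (Cmul I (Cmul (Cmul P1 P2) (Cmul OWN BK))); [ring|];
    rewrite E;
    transitivity (Cmul I' (Cmul (Cmul A1 A2) (Cmul R BB))); [reflexivity| ring] end.
Qed.

(* g(-eta; t1, 1) = 0: the factor responsible for the vanishing of the interior
   coefficients of a block. *)
Lemma gden_at_minus_eta : gden (Copp eta) tt = C0.
Proof.
  unfold gden. rewrite Cexp_opp. fold T. rewrite (Texp_t1 eta).
  pose proof (t1_neq0 eta). field. auto.
Qed.

Lemma K_coef_vanish_plus : forall l r, (1 <= l <= m)%nat -> (1 <= r < k)%nat ->
  K_coef n hbar t0 tt tn u0 un (Bk l + 1 + r)%nat true x = C0.
Proof.
  intros l r Hl Hr. rewrite K_coef_eq.
  rewrite (Cprod_zero _ _ (Bk l + 1 + (r - 1))%nat); [ring| apply in_rng_blk; lia|].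
  destruct (Nat.eqb_spec (Bk l + 1 + (r - 1)) (Bk l + 1 + r)); [lia|].
  unfold gpair, gfun.
  replace (Csub (Cmul (sgnC true) (x (Bk l + 1 + r)%nat)) (x (Bk l + 1 + (r - 1))%nat)) with (Copp eta).
  - rewrite gden_at_minus_eta. unfold Cdiv. ring.
  - rewrite !(D0_block_progression N1 k m eta x HD l) by lia. simpl sgnC.
    replace (Cnat r) with (Cadd (Cnat (r - 1)) C1) by (rewrite <- Cnat_S; f_equal; lia). ring.
Qed.

Lemma K_coef_vanish_minus : forall l r, (1 <= l <= m)%nat -> (r < k - 1)%nat ->
  K_coef n hbar t0 tt tn u0 un (Bk l + 1 + r)%nat false x = C0.
Proof.
  intros l r Hl Hr. rewrite K_coef_eq.
  rewrite (Cprod_zero _ _ (Bk l + 1 + (r + 1))%nat); [ring| apply in_rng_blk; lia|].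
  destruct (Nat.eqb_spec (Bk l + 1 + (r + 1)) (Bk l + 1 + r)); [lia|].
  unfold gpair, gfun.
  replace (Cadd (Cmul (sgnC false) (x (Bk l + 1 + r)%nat)) (x (Bk l + 1 + (r + 1))%nat)) with (Copp eta).
  - rewrite gden_at_minus_eta. unfold Cdiv. ring.
  - rewrite !(D0_block_progression N1 k m eta x HD l) by lia. simpl sgnC.
    replace (Cnat (r + 1)) with (Cadd (Cnat r) C1) by (rewrite Nat.add_1_r, Cnat_S; reflexivity). ring.
Qed.

(* The terms of block l in the restricted operator collapse to the single term of
   B_l^eps, whose shift is eta in the block coordinate y_l. *)
Lemma block_sum_collapse : forall (F : Vec * Vec -> C) l (e : bool), (1 <= l <= m)%nat ->
  Csum (seq (Bk l + 1) k) (fun j => Cmul (K_coef n hbar t0 tt tn u0 un j e x)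
      (Csub (F (chartD0 N1 k m (fun p => Csub (x p) (Cmul hbar (projS0 N1 k m (unitvec j e) p)))))
            (F (chartD0 N1 k m x))))
  = Cmul (Cinv (Cmul t0 tn)) (Cmul ratio (Cmul (B_coef N1 m hbar eta aa bb cc dd l e xs ys)
       (Csub (F (xs, shift_at ys l (Cmul (sgnC e) eta))) (F (chartD0 N1 k m x))))).
Proof.
  intros F l e Hl.
  rewrite <- (Nat.add_0_r (Bk l + 1)), Csum_seq_shift.
  set (V := Cmul (Cinv (Cmul t0 tn)) (Cmul ratio (Cmul (B_coef N1 m hbar eta aa bb cc dd l e xs ys)
       (Csub (F (xs, shift_at ys l (Cmul (sgnC e) eta))) (F (chartD0 N1 k m x)))))).
  rewrite (Csum_ext _ _ (fun r => if Nat.eqb (0 + r) (end_offset e) then V else C0)).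
  - rewrite Csum_indicator.
    destruct (Nat.leb_spec (0 + 0) (end_offset e)), (Nat.ltb_spec (end_offset e) (0 + 0 + k));
      simpl; try reflexivity; unfold end_offset in *; destruct e; lia.
  - intros r Hr. apply in_seq in Hr.
    rewrite (chart_shift_y N1 k m eta hbar x l r e Hl ltac:(lia) Hh).
    simpl (0 + r)%nat.
    destruct (Nat.eqb_spec r (end_offset e)) as [->|Hne].
    + change (Bk l + 1 + end_offset e)%nat with (block_end l e).
      unfold V. rewrite (K_coef_block_end l e Hl). ring.
    + unfold end_offset in Hne. destruct e.
      * rewrite K_coef_vanish_plus by lia. ring.
      * rewrite K_coef_vanish_minus by lia. ring.
Qed.

Lemma restriction_identity : forall F : Vec * Vec -> C,
  restr_act N1 k m hbar (Koornwinder_op n hbar t0 tt tn u0 un) F x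
  = Cadd (Cmul (Cinv (Cmul t0 tn)) (genK_act N1 m hbar eta aa bb cc dd F (chartD0 N1 k m x)))
         (Cmul (kappa_t n t0 tt tn) (F (chartD0 N1 k m x))).
Proof.
  intros F.
  rewrite restr_act_Koornwinder. f_equal.
  unfold genK_act. cbv zeta.
  rewrite (rng_split n k m Hn), Csum_app, Csum_flat_map.
  change (F (chartD0 N1 k m x)) with (F (xs, ys)).
  match goal with |- Cadd ?S1 ?S2 = Cmul ?I (Cadd ?G1 (Cmul ?R ?G2)) =>
    assert (E1 : S1 = Cmul I G1); [|assert (E2 : S2 = Cmul I (Cmul R G2)); [|rewrite E1, E2; ring]] end.
  - rewrite <- Csum_scal. apply Csum_ext. intros i Hi. unfold rng in Hi; apply in_seq in Hi.
    rewrite <- Csum_scal. apply Csum_ext. intros e _.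
    rewrite (K_coef_free i e), chart_shift_x by lia. ring.
  - rewrite <- !Csum_scal. apply Csum_ext. intros l Hl. unfold rng in Hl; apply in_seq in Hl.
    rewrite Csum_signs_swap, Csum_signs, !block_sum_collapse by lia.
    change (F (chartD0 N1 k m x)) with (F (xs, ys)).
    change (Cexp (Cdiv hbar (Cnat 2))) with qq. change (Cexp (Cdiv eta (Cnat 2))) with tt. ring.
Qed.
End OnD0.

(* Nonvanishing criteria: e^w <> 1 forces Re w = 0 and Im w in pi Z; this is excluded
   either by a nonzero real part or, for nonzero integer multiples of eta, by the
   assumption hbar = k eta notin pi i Q. *)
Lemma exp_eq1 : forall w, Cexp w = C1 -> Cre w = 0 /\ exists z : Z, Cim w = IZR z * PI.
Proof.
  intros [a b] H. unfold Cexp, C1, CR in H. injection H. intros H2 H1. simpl.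
  assert (He : exp a > 0) by apply exp_pos.
  assert (Hs : sin b = 0) by (apply Rmult_eq_reg_l with (exp a); lra).
  pose proof (sin2_cos2 b) as Hsc. unfold Rsqr in Hsc.
  assert (Hc : cos b * cos b = 1) by nra.
  assert (Hea : exp a * exp a = 1).
  { replace 1 with ((exp a * cos b) * (exp a * cos b)) by (rewrite H1; ring). nra. }
  assert (Hea1 : exp a = 1) by nra.
  split.
  - rewrite <- exp_0 in Hea1. apply exp_inv in Hea1. exact Hea1.
  - apply sin_eq_0_0. exact Hs.
Qed.

Lemma exp_ne1_re : forall w, Cre w <> 0 -> Cexp w <> C1.
Proof. intros w Hw H. apply exp_eq1 in H. tauto. Qed.

Lemma CZ_nat : forall a : nat, CZ (Z.of_nat a) = Cnat a.
Proof. intros. unfold CZ, Cnat. rewrite <- INR_IZR_INZ. reflexivity. Qed.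
Lemma CZ_sub_nat : forall a b : nat, CZ (Z.of_nat a - Z.of_nat b) = Csub (Cnat a) (Cnat b).
Proof.
  intros. apply C_ext; unfold CZ, Cnat, CR, Csub, Cadd, Copp; cbn [Cre Cim];
  rewrite ?minus_IZR, <- ?INR_IZR_INZ; ring.
Qed.

Lemma exp_multiple_ne1 : forall (k : nat) eta hbar (c : Z), hbar = Cmul (Cnat k) eta -> not_in_piIQ hbar ->
  c <> 0%Z -> Cexp (Cmul (CZ c) eta) <> C1.
Proof.
  intros k eta hbar c Hh Hp Hc H. apply exp_eq1 in H as [Hre [z Him]].
  apply (Hp (Z.of_nat k * z)%Z c Hc).
  assert (Hw : Cmul (CZ c) eta = mkC 0 (IZR z * PI)).
  { apply C_ext; simpl; [exact Hre| exact Him]. }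
  rewrite Hh. replace (Cmul (CZ c) (Cmul (Cnat k) eta)) with (Cmul (Cnat k) (Cmul (CZ c) eta)) by ring.
  rewrite Hw. rewrite <- CZ_nat. apply C_ext; unfold CZ, Cmul, CR; cbn [Cre Cim]; rewrite mult_IZR; ring.
Qed.

Lemma gden1_ne : forall w, Cexp w <> C1 -> gden w C1 <> C0.
Proof. intros w H E. apply H. unfold gden in E. rewrite Cinv_C1 in E.
  replace (Cexp w) with (Cadd (Csub (Cmul C1 (Cexp w)) C1) C1) by ring. rewrite E. ring. Qed.
Lemma gden_exp_ne : forall w b, Cexp (Cadd w (Cmul (Cnat 2) b)) <> C1 -> gden w (Cexp b) <> C0.
Proof.
  intros w b H E. apply H. rewrite Cexp_add, Cexp_2. unfold gden in E.
  pose proof (Cexp_neq0 b).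
  replace (Cexp w) with (Cmul (Cinv (Cexp b)) (Cadd (Csub (Cmul (Cexp b) (Cexp w)) (Cinv (Cexp b))) (Cinv (Cexp b))))
    by (field; auto).
  rewrite E. field. auto.
Qed.
Lemma sub1_ne : forall v, Cexp v <> C1 -> Csub C1 (Cexp v) <> C0.
Proof. intros v H E. apply H. replace (Cexp v) with (Csub C1 (Csub C1 (Cexp v))) by ring. rewrite E. ring. Qed.
Lemma sub1_div_ne : forall v a, Cexp (Csub v a) <> C1 -> Csub C1 (Cmul (Cinv (Cexp a)) (Cexp v)) <> C0.
Proof.
  intros v a H E. apply H. rewrite Cexp_sub. unfold Cdiv.
  replace (Cmul (Cexp v) (Cinv (Cexp a))) with (Csub C1 (Csub C1 (Cmul (Cinv (Cexp a)) (Cexp v)))) by ring.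
  rewrite E. ring.
Qed.

Definition sgnR (e : bool) : R := if e then 1 else -1.
Lemma Cre_add : forall a b, Cre (Cadd a b) = Cre a + Cre b. Proof. reflexivity. Qed.
Lemma Cre_sub : forall a b, Cre (Csub a b) = Cre a - Cre b. Proof. intros; simpl; ring. Qed.
Lemma Cre_sgn : forall e a, Cre (Cmul (sgnC e) a) = sgnR e * Cre a.
Proof. intros [] a; simpl; ring. Qed.
Lemma Cre_2 : forall a, Cre (Cmul (Cnat 2) a) = 2 * Cre a.
Proof. intros. unfold Cnat, CR; simpl. ring. Qed.
Lemma Cre_div4 : forall a, Cre (Cdiv a (Cnat 4)) = Cre a / 4.
Proof. intros. unfold Cdiv, Cnat, CR, Cinv, Cmul; simpl. field. Qed.
Lemma Cre_CR : forall r, Cre (CR r) = r. Proof. reflexivity. Qed.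
Lemma sgnR_abs : forall e, Rabs (sgnR e) = 1.
Proof. intros []; simpl; [apply Rabs_R1| rewrite Rabs_left by lra; lra]. Qed.
Lemma Cre_lin : forall a b e, Cre (Cmul (Csub (Cdiv (Cnat a) (Cnat 2)) (Cnat b)) e) = (INR a / 2 - INR b) * Cre e.
Proof. intros. unfold Cdiv, Cnat, CR, Cinv, Cmul, Csub, Cadd, Copp; simpl. field. Qed.

Lemma dominant_ne0 : forall R M u s, 0 <= M -> M < R -> 1 <= Rabs u -> Rabs s <= M -> R * u + s <> 0.
Proof.
  intros R M u s HM HR Hu Hs E.
  assert (Rabs (R * u) = Rabs s) by (replace (R * u) with (- s) by lra; apply Rabs_Ropp).
  rewrite Rabs_mult, Rabs_right in H by lra. nra.
Qed.

Lemma nat_diff_ge1 : forall a b : nat, a <> b -> 1 <= Rabs (INR a - INR b).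
Proof.
  intros a b H. destruct (Nat.lt_total a b) as [Hl|[He|Hl]]; [|contradiction|].
  - apply lt_INR in Hl. assert (INR (S a) <= INR b) by (apply le_INR; apply INR_lt in Hl; lia).
    rewrite S_INR in H0. rewrite Rabs_left by lra. lra.
  - assert (INR (S b) <= INR a) by (apply le_INR; lia). rewrite S_INR in H0.
    rewrite Rabs_right by lra. lra.
Qed.
Lemma nat_sum_ge1 : forall a b : nat, (1 <= a)%nat -> 1 <= Rabs (INR a + INR b).
Proof.
  intros a b Ha. apply le_INR in Ha. simpl in Ha. pose proof (pos_INR b).
  rewrite Rabs_right by lra. lra.
Qed.
Lemma signed_diff_ge1 : forall e (a b : nat), (e = false /\ (1 <= a)%nat) \/ a <> b -> 1 <= Rabs (sgnR e * INR a - INR b).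
Proof.
  intros [] a b H; simpl.
  - replace (1 * INR a - INR b) with (INR a - INR b) by ring. apply nat_diff_ge1. destruct H as [[H _]|H]; [discriminate|auto].
  - replace (-1 * INR a - INR b) with (- (INR a + INR b)) by ring. rewrite Rabs_Ropp.
    destruct (Nat.eq_dec a 0) as [->|Ha]; [destruct H as [[_ H]|H]; [lia|]|apply nat_sum_ge1; lia].
    simpl. replace (0 + INR b) with (INR b - INR 0) by (simpl; ring). rewrite Rabs_minus_sym.
    apply nat_diff_ge1. auto.
Qed.
Lemma signed_sum_ge1 : forall e (a b : nat), (e = true /\ (1 <= a)%nat) \/ a <> b -> 1 <= Rabs (sgnR e * INR a + INR b).
Proof.
  intros [] a b H; simpl.
  - replace (1 * INR a + INR b) with (INR a + INR b) by ring.
    destruct (Nat.eq_dec a 0) as [->|Ha]; [destruct H as [[_ H]|H]; [lia|]|apply nat_sum_ge1; lia].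
    simpl. replace (0 + INR b) with (INR b - INR 0) by (simpl; ring). apply nat_diff_ge1. auto.
  - replace (-1 * INR a + INR b) with (INR b - INR a) by ring. apply nat_diff_ge1.
    destruct H as [[H _]|H]; [discriminate|auto].
Qed.
Lemma double_nat_ge1 : forall e (a : nat), (1 <= a)%nat -> 1 <= Rabs (2 * (sgnR e * INR a)).
Proof.
  intros e a Ha. apply le_INR in Ha. simpl in Ha. rewrite Rabs_mult, Rabs_mult, sgnR_abs.
  rewrite (Rabs_right 2) by lra. rewrite Rabs_right by lra. lra.
Qed.

(* Index j lies in the "group"
   group_index j (itself for a free index, N1 + l for an index of block l), and
   generic_point j = spacing * group_index j + (deviation of size <= k |Re eta|),
   the deviation inside a block being the arithmetic progression required by D_0.
   Since spacing exceeds every deviation that can occur, any combination whose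
   group part does not cancel has nonzero real part. *)
Section GenericPoint.
Variables (n k m : nat) (eta hbar : C).
Hypothesis Hk : (2 <= k)%nat.
Hypothesis Hh : hbar = Cmul (Cnat k) eta.
Hypothesis Hp : not_in_piIQ hbar.
Local Notation N1 := (n - m * k)%nat.

Definition dev_bound := INR k * Rabs (Cre eta).
Definition err_bound := 2 * dev_bound + Rabs (Cre hbar) + Rabs (Cre eta).
Definition spacing := err_bound + 1.
Definition group_index (j : nat) : nat := if (j <=? N1)%nat then j else (N1 + 1 + (j - N1 - 1) / k)%nat.
Definition block_offset (j : nat) : nat := ((j - N1 - 1) mod k)%nat.
Definition generic_point (j : nat) : C :=
  if (j <=? N1)%nat then CR (spacing * INR j)
  else Cadd (CR (spacing * INR (group_index j)))
            (Cmul (Csub (Cdiv (Cnat (k - 1)) (Cnat 2)) (Cnat (block_offset j))) eta).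

Lemma dev_bound_ge0 : 0 <= dev_bound.
Proof. unfold dev_bound. apply Rmult_le_pos; [apply pos_INR| apply Rabs_pos]. Qed.
Lemma err_bound_ge0 : 0 <= err_bound.
Proof.
  unfold err_bound. pose proof dev_bound_ge0. pose proof (Rabs_pos (Cre hbar)).
  pose proof (Rabs_pos (Cre eta)). lra.
Qed.

Definition deviation (j : nat) : R := Cre (generic_point j) - spacing * INR (group_index j).

Lemma Cre_generic_point : forall j, Cre (generic_point j) = spacing * INR (group_index j) + deviation j.
Proof. intros. unfold deviation. ring. Qed.

Lemma deviation_bound : forall j, Rabs (deviation j) <= dev_bound.
Proof.
  intros j. unfold deviation, generic_point, group_index. destruct (j <=? N1)%nat.
  - rewrite Cre_CR. replace (spacing * INR j - spacing * INR j) with 0 by ring. rewrite Rabs_R0. apply dev_bound_ge0.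
  - rewrite Cre_add, Cre_CR, Cre_lin.
    replace (spacing * INR (N1 + 1 + (j - N1 - 1) / k) + (INR (k - 1) / 2 - INR (block_offset j)) * Cre eta -
      spacing * INR (N1 + 1 + (j - N1 - 1) / k)) with ((INR (k - 1) / 2 - INR (block_offset j)) * Cre eta) by ring.
    rewrite Rabs_mult. unfold dev_bound. apply Rmult_le_compat_r; [apply Rabs_pos|].
    assert (Hr : (block_offset j < k)%nat) by (unfold block_offset; apply Nat.mod_upper_bound; lia).
    apply lt_INR in Hr. pose proof (pos_INR (block_offset j)).
    rewrite minus_INR by lia. simpl INR.
    assert (HK2 : 2 <= INR k) by (replace 2 with (INR 2) by (simpl; ring); apply le_INR; lia).
    apply Rabs_le. split; lra.
Qed.

Lemma group_index_ge1 : forall j, (1 <= j)%nat -> (1 <= group_index j)%nat.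
Proof. intros j Hj. unfold group_index. destruct (j <=? N1)%nat; lia. Qed.

Lemma generic_point_D0 : inD0 N1 k m eta generic_point.
Proof.
  intros j [H1 [H2 H3]]. unfold generic_point, group_index, block_offset.
  replace (j <=? N1)%nat with false by (symmetry; apply Nat.leb_gt; lia).
  replace (S j <=? N1)%nat with false by (symmetry; apply Nat.leb_gt; lia).
  replace (S j - N1 - 1)%nat with ((j - N1 - 1) + 1)%nat by lia.
  replace (j - N1)%nat with ((j - N1 - 1) + 1)%nat in H3 by lia.
  destruct (divmod_succ k _ ltac:(lia) H3) as [E1 E2]. rewrite E1, E2.
  rewrite (Nat.add_1_r ((j - N1 - 1) mod k)), (Cnat_S ((j - N1 - 1) mod k)). ring.
Qed.

Lemma generic_point_block_first : forall l, (1 <= l <= m)%nat ->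
  generic_point (N1 + k * (l - 1) + 1)%nat = Cadd (CR (spacing * INR (N1 + l))) (Cmul (Cdiv (Cnat (k - 1)) (Cnat 2)) eta).
Proof.
  intros l Hl. unfold generic_point, group_index, block_offset.
  replace (N1 + k * (l - 1) + 1 <=? N1)%nat with false by (symmetry; apply Nat.leb_gt; nia).
  destruct (block_div_mod k N1 (l - 1) 0 ltac:(lia)) as [E1 E2].
  rewrite Nat.add_0_r in E1, E2. rewrite E1, E2.
  replace (N1 + 1 + (l - 1))%nat with (N1 + l)%nat by lia. rewrite Cnat_0. ring.
Qed.

Lemma generic_point_avg : forall l, (1 <= l <= m)%nat -> snd (chartD0 N1 k m generic_point) l = CR (spacing * INR (N1 + l)).
Proof.
  intros l Hl. rewrite (chart_block_average N1 k m eta generic_point ltac:(lia) generic_point_D0 l Hl), generic_point_block_first by auto. ring.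
Qed.

Lemma generic_point_free : forall j, (1 <= j <= N1)%nat -> fst (chartD0 N1 k m generic_point) j = CR (spacing * INR j).
Proof.
  intros j Hj. unfold chartD0; cbv beta iota delta [fst].
  replace ((1 <=? j)%nat && (j <=? N1)%nat)%bool with true
    by (symmetry; apply andb_true_intro; split; apply Nat.leb_le; lia).
  unfold generic_point. replace (j <=? N1)%nat with true by (symmetry; apply Nat.leb_le; lia). reflexivity.
Qed.

Lemma generic_point_same_group : forall i j, (1 <= i <= n)%nat -> (1 <= j <= n)%nat -> i <> j -> group_index i = group_index j ->
  Csub (generic_point i) (generic_point j) = Cmul (CZ (Z.of_nat (block_offset j) - Z.of_nat (block_offset i))) eta /\ block_offset i <> block_offset j.
Proof.
  intros i j Hi Hj Hne Hg. unfold group_index in Hg.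
  destruct (i <=? N1)%nat eqn:Ei; destruct (j <=? N1)%nat eqn:Ej;
  apply Nat.leb_le in Ei || apply Nat.leb_gt in Ei; apply Nat.leb_le in Ej || apply Nat.leb_gt in Ej;
  try lia.
  assert (Hq : ((i - N1 - 1) / k = (j - N1 - 1) / k)%nat) by lia.
  assert (Hr : block_offset i <> block_offset j).
  { unfold block_offset. intro E. apply Hne.
    pose proof (Nat.div_mod_eq (i - N1 - 1) k). pose proof (Nat.div_mod_eq (j - N1 - 1) k).
    rewrite Hq, E in H. lia. }
  split; auto.
  unfold generic_point, group_index. replace (i <=? N1)%nat with false by (symmetry; apply Nat.leb_gt; lia).
  replace (j <=? N1)%nat with false by (symmetry; apply Nat.leb_gt; lia).
  rewrite Hq, CZ_sub_nat. ring.
Qed.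

Lemma spaced_ne1 : forall w u s, Cre w = spacing * u + s -> 1 <= Rabs u -> Rabs s <= err_bound -> Cexp w <> C1.
Proof.
  intros w u s Hw Hu Hs. apply exp_ne1_re. rewrite Hw. apply (dominant_ne0 spacing err_bound); auto.
  apply err_bound_ge0. unfold spacing; lra.
Qed.
Lemma dev_combination_bound : forall e a b, Rabs a <= dev_bound -> Rabs b <= dev_bound ->
  Rabs (sgnR e * a - b) <= err_bound /\ Rabs (sgnR e * a + b) <= err_bound.
Proof.
  intros e a b Ha Hb. unfold err_bound. pose proof (Rabs_pos (Cre hbar)). pose proof (Rabs_pos (Cre eta)).
  assert (Rabs (sgnR e * a) <= dev_bound) by (rewrite Rabs_mult, sgnR_abs; lra).
  split; [unfold Rminus; eapply Rle_trans; [apply Rabs_triang|rewrite Rabs_Ropp; lra]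
         | eapply Rle_trans; [apply Rabs_triang| lra]].
Qed.
Lemma dev_double_bound : forall e a c, Rabs a <= dev_bound -> (c = 0 \/ c = Cre hbar \/ c = Cre eta) -> Rabs (2 * (sgnR e * a) - c) <= err_bound.
Proof.
  intros e a c Ha Hc. unfold err_bound. pose proof (Rabs_pos (Cre hbar)). pose proof (Rabs_pos (Cre eta)).
  assert (Rabs (2 * (sgnR e * a)) <= 2 * dev_bound) by (rewrite !Rabs_mult, sgnR_abs, Rabs_right by lra; lra).
  unfold Rminus; eapply Rle_trans; [apply Rabs_triang|rewrite Rabs_Ropp].
  destruct Hc as [Hc|[Hc|Hc]]; rewrite Hc; [rewrite Rabs_R0|..]; lra.
Qed.
Lemma shift_bound : forall c1 c2 : R, c1 = Cre eta \/ c1 = Cre hbar -> c2 = Cre eta \/ c2 = Cre hbar ->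
  Rabs (2 * (c1 / 4 - c2 / 4)) <= err_bound.
Proof.
  intros c1 c2 H1 H2. unfold err_bound. pose proof dev_bound_ge0.
  pose proof (Rabs_pos (Cre hbar)). pose proof (Rabs_pos (Cre eta)).
  replace (2 * (c1 / 4 - c2 / 4)) with (c1 / 2 + (- c2) / 2) by field.
  eapply Rle_trans; [apply Rabs_triang|].
  unfold Rdiv. rewrite !Rabs_mult, Rabs_Ropp. rewrite (Rabs_right (/2)) by lra.
  destruct H1 as [H1|H1]; destruct H2 as [H2|H2]; rewrite H1, H2; lra.
Qed.
Lemma eta_ne1 : Cexp eta <> C1.
Proof.
  replace eta with (Cmul (CZ 1) eta) at 1 by (apply C_ext; unfold CZ, CR, Cmul; simpl; ring).
  apply (exp_multiple_ne1 k eta hbar 1 Hh Hp). discriminate.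
Qed.

Lemma t1_minus_inv_ne0 : Csub (Cexp (Cdiv eta (Cnat 2))) (Cinv (Cexp (Cdiv eta (Cnat 2)))) <> C0.
Proof.
  intro E. apply eta_ne1. rewrite <- (Cexp_half_sq eta).
  pose proof (Cexp_neq0 (Cdiv eta (Cnat 2))) as H0.
  replace (Cmul (Cexp (Cdiv eta (Cnat 2))) (Cexp (Cdiv eta (Cnat 2))))
    with (Cadd (Cmul (Cexp (Cdiv eta (Cnat 2)))
                     (Csub (Cexp (Cdiv eta (Cnat 2))) (Cinv (Cexp (Cdiv eta (Cnat 2)))))) C1)
    by (field; auto).
  rewrite E. ring.
Qed.

Lemma inv_t1_sq_ne1 : Csub C1 (Cinv (Cmul (Cexp (Cdiv eta (Cnat 2))) (Cexp (Cdiv eta (Cnat 2))))) <> C0.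
Proof.
  rewrite (Cexp_half_sq eta). intro E. apply eta_ne1. pose proof (Cexp_neq0 eta).
  assert (E' : Cinv (Cexp eta) = C1).
  { replace (Cinv (Cexp eta)) with (Csub C1 (Csub C1 (Cinv (Cexp eta)))) by ring. rewrite E. ring. }
  replace (Cexp eta) with (Cinv (Cinv (Cexp eta))) by (field; nonzero_side).
  rewrite E'. apply Cinv_C1.
Qed.

Lemma generic_point_diff_ne1 : forall i j e, (1 <= i <= n)%nat -> (1 <= j <= n)%nat -> j <> i ->
  Cexp (Csub (Cmul (sgnC e) (generic_point i)) (generic_point j)) <> C1.
Proof.
  intros i j e Hi Hj Hji. pose proof (group_index_ge1 i ltac:(lia)).
  destruct (dev_combination_bound e (deviation i) (deviation j) (deviation_bound i) (deviation_bound j))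
    as [B _].
  destruct (Nat.eq_dec (group_index i) (group_index j)) as [Eg|Eg]; [destruct e|].
  - destruct (generic_point_same_group i j ltac:(lia) ltac:(lia) ltac:(lia) Eg) as [E Hoff].
    replace (Csub (Cmul (sgnC true) (generic_point i)) (generic_point j))
      with (Csub (generic_point i) (generic_point j)) by (simpl; ring).
    rewrite E. apply (exp_multiple_ne1 k eta hbar _ Hh Hp). lia.
  - apply (spaced_ne1 _ (sgnR false * INR (group_index i) - INR (group_index j))
             (sgnR false * deviation i - deviation j)); auto.
    + rewrite Cre_sub, Cre_sgn, !Cre_generic_point. ring.
    + apply signed_diff_ge1. left; auto.
  - apply (spaced_ne1 _ (sgnR e * INR (group_index i) - INR (group_index j))
             (sgnR e * deviation i - deviation j)); auto.
    + rewrite Cre_sub, Cre_sgn, !Cre_generic_point. ring.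
    + apply signed_diff_ge1. right; auto.
Qed.

Lemma generic_point_sum_ne1 : forall i j e, (1 <= i <= n)%nat -> (1 <= j <= n)%nat -> j <> i ->
  Cexp (Cadd (Cmul (sgnC e) (generic_point i)) (generic_point j)) <> C1.
Proof.
  intros i j e Hi Hj Hji. pose proof (group_index_ge1 i ltac:(lia)).
  destruct (dev_combination_bound e (deviation i) (deviation j) (deviation_bound i) (deviation_bound j))
    as [_ B].
  destruct (Nat.eq_dec (group_index i) (group_index j)) as [Eg|Eg]; [destruct e|].
  - apply (spaced_ne1 _ (sgnR true * INR (group_index i) + INR (group_index j))
             (sgnR true * deviation i + deviation j)); auto.
    + rewrite Cre_add, Cre_sgn, !Cre_generic_point. ring.
    + apply signed_sum_ge1. left; auto.
  - destruct (generic_point_same_group j i ltac:(lia) ltac:(lia) ltac:(lia) (eq_sym Eg)) as [E Hoff].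
    replace (Cadd (Cmul (sgnC false) (generic_point i)) (generic_point j))
      with (Csub (generic_point j) (generic_point i)) by (simpl; ring).
    rewrite E. apply (exp_multiple_ne1 k eta hbar _ Hh Hp). lia.
  - apply (spaced_ne1 _ (sgnR e * INR (group_index i) + INR (group_index j))
             (sgnR e * deviation i + deviation j)); auto.
    + rewrite Cre_add, Cre_sgn, !Cre_generic_point. ring.
    + apply signed_sum_ge1. right; auto.
Qed.

Lemma double_coord_ne1 : forall w e (a : nat) dev c, (1 <= a)%nat -> Rabs dev <= dev_bound ->
  Cre w = spacing * INR a + dev -> (c = 0 \/ c = Cre hbar \/ c = Cre eta) ->
  forall v, Cre v = 2 * (sgnR e * Cre w) - c -> Cexp v <> C1.
Proof.
  intros w e a dev c Ha Hdev Hw Hc v Hv.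
  apply (spaced_ne1 _ (2 * (sgnR e * INR a)) (2 * (sgnR e * dev) - c)).
  - rewrite Hv, Hw. ring.
  - apply double_nat_ge1; auto.
  - apply dev_double_bound; auto.
Qed.

Lemma generic_point_K_good : K_good n hbar (Cexp (Cdiv eta (Cnat 2))) generic_point.
Proof.
  unfold K_good. cbv zeta. split; [exact t1_minus_inv_ne0|].
  intros i e Hi. apply in_rng_iff in Hi.
  pose proof (group_index_ge1 i ltac:(lia)) as Hgi.
  split; [|split].
  - intros j Hj Hji. apply in_rng_iff in Hj.
    split; apply gden1_ne; [apply generic_point_diff_ne1 | apply generic_point_sum_ne1]; lia.
  - rewrite (Cexp_half_sq hbar). apply sub1_div_ne.
    apply (double_coord_ne1 (generic_point i) e _ (deviation i) (Cre hbar) Hgi (deviation_bound i)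
             (Cre_generic_point i)); auto.
    rewrite Cre_sub, Cre_2, Cre_sgn. ring.
  - apply sub1_ne.
    apply (double_coord_ne1 (generic_point i) e _ (deviation i) 0 Hgi (deviation_bound i)
             (Cre_generic_point i)); auto.
    rewrite Cre_2, Cre_sgn. ring.
Qed.

Lemma lattice_gden_ne0 : forall (a b : nat) e beta, (1 <= a)%nat -> a <> b ->
  Rabs (2 * Cre beta) <= err_bound ->
  gden (Csub (Cmul (sgnC e) (CR (spacing * INR a))) (CR (spacing * INR b))) (Cexp beta) <> C0 /\
  gden (Cadd (Cmul (sgnC e) (CR (spacing * INR a))) (CR (spacing * INR b))) (Cexp beta) <> C0.
Proof.
  intros a b e beta Ha Hab Hbeta. split; apply gden_exp_ne.
  - apply (spaced_ne1 _ (sgnR e * INR a - INR b) (2 * Cre beta)); auto.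
    + rewrite Cre_add, Cre_2, Cre_sub, Cre_sgn, !Cre_CR. ring.
    + apply signed_diff_ge1; auto.
  - apply (spaced_ne1 _ (sgnR e * INR a + INR b) (2 * Cre beta)); auto.
    + rewrite Cre_add, Cre_2, Cre_add, Cre_sgn, !Cre_CR. ring.
    + apply signed_sum_ge1; auto.
Qed.

Lemma lattice_gden1_ne0 : forall (a b : nat) e, (1 <= a)%nat -> a <> b ->
  gden (Csub (Cmul (sgnC e) (CR (spacing * INR a))) (CR (spacing * INR b))) C1 <> C0 /\
  gden (Cadd (Cmul (sgnC e) (CR (spacing * INR a))) (CR (spacing * INR b))) C1 <> C0.
Proof.
  intros a b e Ha Hab. rewrite <- Cexp_0. apply lattice_gden_ne0; auto.
  unfold C0, CR. simpl Cre. rewrite Rmult_0_r, Rabs_R0. apply err_bound_ge0.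
Qed.

Lemma lattice_double_ne1 : forall (a : nat) e c, (1 <= a)%nat ->
  (c = 0 \/ c = Cre hbar \/ c = Cre eta) ->
  forall v, Cre v = 2 * (sgnR e * Cre (CR (spacing * INR a))) - c -> Cexp v <> C1.
Proof.
  intros a e c Ha Hc. apply (double_coord_ne1 _ e a 0 c Ha); auto.
  - rewrite Rabs_R0. apply dev_bound_ge0.
  - rewrite Cre_CR. ring.
Qed.

Lemma generic_point_M_good : M_good N1 m hbar eta (chartD0 N1 k m generic_point).
Proof.
  unfold M_good. cbv zeta. split; [exact inv_t1_sq_ne1|split].
  - intros i e Hi. apply in_rng_iff in Hi. rewrite (generic_point_free i Hi).
    split; [|split; [|split]].
    + intros j Hj Hji. apply in_rng_iff in Hj. rewrite (generic_point_free j Hj).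
      apply lattice_gden1_ne0; lia.
    + intros l Hl. apply in_rng_iff in Hl. rewrite (generic_point_avg l Hl), Cexp_inv_mul.
      apply lattice_gden_ne0; [lia|lia|]. rewrite Cre_sub, !Cre_div4. apply shift_bound; auto.
    + rewrite (Cexp_half_sq hbar). apply sub1_div_ne. apply (lattice_double_ne1 i e (Cre hbar)); [lia|auto|].
      rewrite Cre_sub, Cre_2, Cre_sgn. ring.
    + apply sub1_ne. apply (lattice_double_ne1 i e 0); [lia|auto|].
      rewrite Cre_2, Cre_sgn. ring.
  - intros l e Hl. apply in_rng_iff in Hl. rewrite (generic_point_avg l Hl).
    split; [|split; [|split]].
    + intros j Hj. apply in_rng_iff in Hj. rewrite (generic_point_free j Hj), Cexp_mul_inv.
      apply lattice_gden_ne0; [lia|lia|]. rewrite Cre_sub, !Cre_div4. apply shift_bound; auto.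
    + intros l' Hl' Hll. apply in_rng_iff in Hl'. rewrite (generic_point_avg l' Hl').
      apply lattice_gden1_ne0; lia.
    + rewrite (Cexp_half_sq eta). apply sub1_div_ne. apply (lattice_double_ne1 (N1 + l) e (Cre eta)); [lia|auto|].
      rewrite Cre_sub, Cre_2, Cre_sgn. ring.
    + apply sub1_ne. apply (lattice_double_ne1 (N1 + l) e 0); [lia|auto|].
      rewrite Cre_2, Cre_sgn. ring.
Qed.
End GenericPoint.

(* Main theorem: the generic point witnesses well-definedness, and on every point of D_0
   where the denominators are nonzero the restricted operator is
   (t0 tn)^{-1} M_{N1,N2} + kappa_t. *)
Theorem mainTheorem18 (n k m : nat) (eta1 hbar t0 tn u0 un : C) :
  (2 <= k)%nat -> (1 <= m)%nat -> (m * k <= n)%nat ->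
  hbar = Cmul (Cnat k) eta1 -> not_in_piIQ hbar ->
  t0 <> C0 -> tn <> C0 -> u0 <> C0 -> un <> C0 ->
  let N1 := (n - m * k)%nat in
  let t1 := Cexp (Cdiv eta1 (Cnat 2)) in
  let q := Cexp (Cdiv hbar (Cnat 2)) in
  let a := Cmul (Cmul t0 u0) (Cinv q) in
  let b := Copp (Cmul (Cmul t0 (Cinv u0)) (Cinv q)) in
  let c := Cmul tn un in
  let d := Copp (Cmul tn (Cinv un)) in
  (* well-definedness: the restriction to D_0 has meromorphic coefficients *)
  (exists x : Vec, inD0 N1 k m eta1 x /\ K_good n hbar t1 x /\
                   M_good N1 m hbar eta1 (chartD0 N1 k m x)) /\
  (* identity of operators on D_0 *)
  (forall (F : Vec * Vec -> C) (x : Vec),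
     inD0 N1 k m eta1 x -> K_good n hbar t1 x -> M_good N1 m hbar eta1 (chartD0 N1 k m x) ->
     restr_act N1 k m hbar (Koornwinder_op n hbar t0 t1 tn u0 un) F x =
     Cadd (Cmul (Cinv (Cmul t0 tn)) (genK_act N1 m hbar eta1 a b c d F (chartD0 N1 k m x)))
          (Cmul (kappa_t n t0 t1 tn) (F (chartD0 N1 k m x)))).
Proof.
  intros Hk _ Hn Hh Hp _ _ Hu0 Hun N1 t1 q a b c d.
  split.
  - exists (generic_point n k m eta1 hbar). split; [|split].
    + exact (generic_point_D0 n k m eta1 hbar Hk).
    + exact (generic_point_K_good n k m eta1 hbar Hk Hh Hp).
    + exact (generic_point_M_good n k m eta1 hbar Hk Hh Hp).
  - intros F x HD HK HM.
    exact (restriction_identity n k m eta1 hbar x Hk Hn Hh HD HK t0 tn u0 un Hu0 Hun HM F).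
Qed.
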